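(* There exist Euclidean self-orthogonal linear codes with each of the following parameters: over $\mathbb{F}_4$: $[8,2,4]_4$, $[8,3,4]_4$, $[8,4,4]_4$; over $\mathbb{F}_8$: $[8,3,4]_8$, $[8,4,4]_8$, $[10,4,5]_8$, $[10,5,4]_8$, $[12,4,6]_8$, $[12,5,6]_8$, $[12,6,5]_8$, $[14,5,7]_8$, $[14,6,6]_8$, $[14,7,6]_8$, $[16,5,8]_8$, $[16,6,8]_8$, $[16,7,6]_8$, $[16,8,6]_8$.
   Context: $[n,k,d]_q$ denotes a linear code over $\mathbb{F}_q$ of length $n$, dimension $k$, minimum Hamming distance $d$. A code $\mathcal{C}$ is Euclidean self-orthogonal if $\mathcal{C}\subseteq\mathcal{C}^{\perp_E}$, where $\perp_E$ is the dual under $\sum_ix_iy_i$ (self-dual when equality holds). *)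

From HB Require Import structures.
From mathcomp Require Import all_boot all_order all_algebra all_field.
Set Implicit Arguments. Unset Strict Implicit. Unset Printing Implicit Defensive.
Import GRing.Theory.
Local Open Scope ring_scope.

Definition hamming_dist (F : fieldType) (n : nat) (x y : 'rV[F]_n) : nat :=
  #|[set i : 'I_n | x 0 i != y 0 i]|.

Definition euclid_ip (F : fieldType) (n : nat) (x y : 'rV[F]_n) : F :=
  \sum_(i < n) x 0 i * y 0 i.

Definition euclid_self_orthogonal (F : fieldType) (n : nat)
    (C : {vspace 'rV[F]_n}) : Prop :=
  forall x y, x \in C -> y \in C -> euclid_ip x y = 0.

Definition min_distance_is (F : fieldType) (n : nat)
    (C : {vspace 'rV[F]_n}) (d : nat) : Prop :=
  (exists x y, [/\ x \in C, y \in C, x != y & hamming_dist x y = d]) /\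
  (forall x y, x \in C -> y \in C -> x != y -> (d <= hamming_dist x y)%N).

Definition is_nkd_code (F : fieldType) (n : nat) (C : {vspace 'rV[F]_n})
    (k d : nat) : Prop :=
  \dim C = k /\ min_distance_is C d.

Definition exists_SO_code (F : fieldType) (n k d : nat) : Prop :=
  exists C : {vspace 'rV[F]_n}, is_nkd_code C k d /\ euclid_self_orthogonal C.

(* Each code is given by a generator matrix G, found by computer search, over
   an explicit model of GF(4) or GF(8) (pairs, resp. triples, of bits), and is
   transported into any field of that order along the embedding fixed by a root
   of X^2 + X + 1, resp. X^3 + X + 1.  Self-orthogonality is G G^T = 0, and the
   first row of G has weight d.  For the lower bound on the distance, G comes
   with a family of information sets J, each with a right inverse of G whose
   rows outside J vanish: a codeword u G vanishing on J satisfies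
   u = u G M = 0.  Since every set of at most d - 1 coordinates misses some J,
   no nonzero codeword has weight below d.  All of this is checked by
   evaluation. *)

From HB Require Import structures.
From mathcomp Require Import all_boot all_order all_algebra all_field ring.
Set Implicit Arguments. Unset Strict Implicit. Unset Printing Implicit Defensive.
Import GRing.Theory.
Local Open Scope ring_scope.

(** * Linear codes given by a generator matrix *)

Section GeneratorMatrix.
Variables (F : fieldType) (k n : nat).
Implicit Types (x y : 'rV[F]_n) (u : 'rV[F]_k) (G : 'M[F]_(k, n)).

Definition weight x := #|[set i | x 0 i != 0]|.

Lemma hamming_distE x y : hamming_dist x y = weight (x - y).
Proof. by apply: eq_card => i; rewrite !inE !mxE subr_eq0. Qed.

Lemma weight_eq0 x : (weight x == 0%N) = (x == 0).
Proof.
rewrite cards_eq0; apply/eqP/eqP => [x0 | ->]; last by apply/setP => i; rewrite !inE mxE eqxx.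
by apply/rowP => i; apply/eqP; move/setP/(_ i): x0; rewrite !inE mxE => /negbFE.
Qed.

Lemma count_support x : count id [seq x 0 i != 0 | i <- enum 'I_n] = weight x.
Proof.
rewrite count_map /weight cardsE cardE /enum_mem size_filter count_filter.
by apply: eq_count => i; rewrite /= andbT.
Qed.

Definition encode G : 'Hom('rV[F]_k, 'rV[F]_n) := linfun (mulmxr G).

Lemma encodeE G u : encode G u = u *m G.
Proof. by rewrite lfunE. Qed.

Definition gen_code G : {vspace 'rV[F]_n} := limg (encode G).

Lemma gen_codeP G x : reflect (exists u, x = u *m G) (x \in gen_code G).
Proof.
apply: (iffP memv_imgP) => [[u _ ->] | [u ->]]; exists u; rewrite ?encodeE //.
by rewrite memvf.
Qed.

Lemma dim_gen_code G : (forall u, u *m G = 0 -> u = 0) -> \dim (gen_code G) = k.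
Proof.
move=> inj; rewrite limg_dim_eq ?dimvf /dim /= ?mul1n //.
have /eqP -> : lker (encode G) == 0%VS.
  apply/lker0P => u v; rewrite !encodeE => /eqP.
  by rewrite -subr_eq0 -mulmxBl => /eqP/inj/eqP; rewrite subr_eq0 => /eqP.
exact: capv0.
Qed.

Lemma min_distance_gen_code G d x :
  (0 < d)%N -> x \in gen_code G -> weight x = d ->
  (forall u, (weight (u *m G) < d)%N -> u = 0) -> min_distance_is (gen_code G) d.
Proof.
move=> d_gt0 Cx wx low; split.
  exists x, 0; split; rewrite ?mem0v ?hamming_distE ?subr0 //.
  by rewrite -weight_eq0 wx -lt0n.
move=> y z /gen_codeP[u ->] /gen_codeP[v ->] neq_yz.
rewrite hamming_distE -mulmxBl leqNgt; apply: contra neq_yz => /low /eqP.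
by rewrite subr_eq0 => /eqP ->.
Qed.

Lemma euclid_ipE x y : euclid_ip x y = (x *m y^T) 0 0.
Proof. by rewrite mxE; apply: eq_bigr => i _; rewrite mxE. Qed.

Lemma self_orthogonal_gen_code G : G *m G^T = 0 -> euclid_self_orthogonal (gen_code G).
Proof.
move=> GGt0 x y /gen_codeP[u ->] /gen_codeP[v ->].
by rewrite euclid_ipE trmx_mul !mulmxA -(mulmxA u) GGt0 mulmx0 mul0mx mxE.
Qed.

Lemma exists_SO_gen_code G d x :
  (0 < d)%N -> x \in gen_code G -> weight x = d -> G *m G^T = 0 ->
  (forall u, (weight (u *m G) < d)%N -> u = 0) -> exists_SO_code F n k d.
Proof.
move=> d_gt0 Cx wx GGt0 low; exists (gen_code G); split; last exact: self_orthogonal_gen_code.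
split; last exact: min_distance_gen_code Cx wx low.
apply: dim_gen_code => u uG0; apply: low.
by move/eqP: uG0; rewrite -weight_eq0 => /eqP ->.
Qed.

Lemma rinv_support_eq0 G (M : 'M[F]_(n, k)) u :
  G *m M = 1%:M -> (forall i, (u *m G) 0 i != 0 -> row i M = 0) -> u = 0.
Proof.
move=> GM1 Msupp; rewrite -[u]mulmx1 -GM1 mulmxA mulmx_sum_row big1 // => i _.
by have [-> | /Msupp ->] := eqVneq ((u *m G) 0 i) 0; rewrite ?scale0r ?scaler0.
Qed.

End GeneratorMatrix.

Definition index_mask n (J : seq nat) : seq bool := mkseq (fun j => j \in J) n.

Fixpoint avoiding (r t : nat) (Js : seq (seq bool)) : bool :=
  match r, t with
  | r'.+1, t'.+1 =>
    has (all negb) Js ||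
    (avoiding r' t' [seq behead J | J <- Js & ~~ head false J] &&
     avoiding r' t (map behead Js))
  | _, _ => Js != [::]
  end.

Lemma has_nth_true (s : seq bool) i : nth false s i -> has id s.
Proof.
move=> si; apply/(has_nthP false); exists i => //.
by case: ltnP si => // /(nth_default false) ->.
Qed.

Lemma avoidingP r t Js : avoiding r t Js ->
  forall T, size T = r -> (count id T <= t)%N ->
  exists2 J, J \in Js & forall i, nth false T i -> ~~ nth false J i.
Proof.
have avoid_empty Js' T : Js' != [::] -> ~~ has id T ->
    exists2 J, J \in Js' & forall i, nth false T i -> ~~ nth false J i.
  case: Js' => [//|J Js'] _ noT; exists J; first exact: mem_head.
  by move=> i /has_nth_true T1; rewrite T1 in noT.
elim: r t Js => [|r IH] [|t] Js /=.
- by move=> Js0 [] // _ _; apply: avoid_empty.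
- by move=> Js0 [] // _ _; apply: avoid_empty.
- by move=> Js0 T _ count0; apply: avoid_empty; rewrite // has_count -leqNgt.
case/orP => [/hasP[J JJs J0] | /andP[avoid1 avoid0]] [//|b T] /= [sizeT] countT.
  exists J => // i _; apply/negP => /has_nth_true/hasP[x Jx x1].
  by move/allP: J0 => /(_ x Jx); rewrite x1.
case: b countT => countT.
  have [_ /mapP[J + ->] avoidJ] := IH _ _ avoid1 T sizeT countT.
  rewrite mem_filter => /andP[J0 JJs].
  by exists J => // [[|i]] /=; [case: J J0 {JJs avoidJ} | rewrite -nth_behead; apply: avoidJ].
have [_ /mapP[J JJs ->] avoidJ] := IH _ _ avoid0 T sizeT countT.
by exists J => // [[|i]] //=; rewrite -nth_behead; apply: avoidJ.
Qed.

Section SeqMatrix.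
Variables (E : eqType) (zero one : E) (add mul : E -> E -> E) (inv : E -> E).
Local Notation smatrix := (seq (seq E)).

Definition sentry (A : smatrix) i j := nth zero (nth [::] A i) j.

Definition ssum (f : nat -> E) s := foldr (fun l => add (f l)) zero (iota 0 s).

Definition smulmx r s t (A B : smatrix) : smatrix :=
  mkseq (fun i => mkseq (fun j => ssum (fun l => mul (sentry A i l) (sentry B l j)) s) t) r.

Definition strmx r t (A : smatrix) : smatrix :=
  mkseq (fun j => mkseq (fun i => sentry A i j) r) t.

Definition sidmx k : smatrix :=
  mkseq (fun i => mkseq (fun j => if i == j then one else zero) k) k.

Definition szero r t : smatrix := nseq r (nseq t zero).

Definition sscale c (v : seq E) := map (mul c) v.

Definition saddv (v w : seq E) := [seq add x.1 x.2 | x <- zip v w].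

(* Adding is subtracting: the models have characteristic 2. *)
Definition sclear c v w := saddv w (sscale (nth zero w c) v).

Fixpoint gauss_jordan (cols : seq nat) (pivots : seq (nat * seq E)) (rows : smatrix) :=
  if cols is c :: cs then
    let i := find (fun v => nth zero v c != zero) rows in
    if (i < size rows)%N then
      let v := nth [::] rows i in
      let v := sscale (inv (nth zero v c)) v in
      gauss_jordan cs ((c, v) :: [seq (p.1, sclear c v p.2) | p <- pivots])
        [seq sclear c v w | w <- take i rows ++ drop i.+1 rows]
    else gauss_jordan cs pivots rows
  else pivots.

(* Gauss-Jordan elimination on [G | 1] with pivots taken in J; the result is
   trusted only through the check G M = 1 in SO_certificate. *)
Definition right_inverse_on n k (J : seq nat) (G : smatrix) : smatrix :=
  let aug := mkseq (fun i => mkseq (sentry G i) n ++ nth [::] (sidmx k) i) k in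
  let pivots := gauss_jordan J [::] aug in
  mkseq (fun c => if c \in J then drop n (nth [::] [seq p.2 | p <- pivots & p.1 == c] 0)
                  else [::]) n.

Definition SO_certificate n k d (G : smatrix) (Js : seq (seq nat)) :=
  [&& (0 < k)%N, (0 < d)%N,
      count (fun j => sentry G 0 j != zero) (iota 0 n) == d,
      smulmx k n k G (strmx k n G) == szero k k,
      all (fun J => smulmx k n k G (right_inverse_on n k J G) == sidmx k) Js
    & avoiding n d.-1 (map (index_mask n) Js)].

Definition certified (c : nat * nat * nat * smatrix * seq (seq nat)) :=
  let: (n, k, d, G, Js) := c in SO_certificate n k d G Js.

End SeqMatrix.

Section Soundness.
Variables (F : fieldType) (E : eqType) (zero one : E) (add mul : E -> E -> E).
Variables (inv : E -> E) (phi : E -> F).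
Hypotheses (phi0 : phi zero = 0) (phi1 : phi one = 1).
Hypotheses (phiD : {morph phi : x y / add x y >-> x + y}).
Hypotheses (phiM : {morph phi : x y / mul x y >-> x * y}).
Hypothesis mulV : forall x, x != zero -> mul x (inv x) = one.

Local Notation sentry := (sentry zero).
Local Notation smulmx := (smulmx zero add mul).
Local Notation right_inverse_on := (right_inverse_on zero one add mul inv).

Lemma phi_eq0 x : (phi x == 0) = (x == zero).
Proof.
apply/eqP/eqP => [phix0 | ->] //; apply/eqP; apply: contraT => x0.
by have := congr1 phi (mulV x0); rewrite phiM phi1 phix0 mul0r => /eqP; rewrite eq_sym oner_eq0.
Qed.

Definition phimx r t (A : seq (seq E)) : 'M[F]_(r, t) := \matrix_(i, j) phi (sentry A i j).

Lemma phi_ssum f s : phi (ssum zero add f s) = \sum_(l < s) phi (f l).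
Proof.
rewrite /ssum -(big_mkord xpredT (phi \o f)) /index_iota subn0.
by elim: (iota 0 s) => [|l ls IH]; rewrite ?big_nil ?big_cons //= phiD IH.
Qed.

Lemma phimx_mul r s t A B : phimx r t (smulmx r s t A B) = phimx r s A *m phimx s t B.
Proof.
apply/matrixP => i j; rewrite !mxE /sentry !nth_mkseq // phi_ssum.
by apply: eq_bigr => l _; rewrite phiM !mxE.
Qed.

Lemma phimx_tr r t A : phimx t r (strmx zero r t A) = (phimx r t A)^T.
Proof. by apply/matrixP => i j; rewrite !mxE /sentry !nth_mkseq. Qed.

Lemma phimx_zero r t : phimx r t (szero zero r t) = 0.
Proof.
apply/matrixP => i j; rewrite !mxE /sentry /szero !nth_nseq.
by case: ifP => _; rewrite ?nth_nseq ?if_same ?nth_nil phi0.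
Qed.

Lemma phimx_id k : phimx k k (sidmx zero one k) = 1%:M.
Proof.
apply/matrixP => i j; rewrite !mxE /sentry !nth_mkseq //.
by rewrite -val_eqE; case: eqP => _; rewrite ?phi1 ?phi0.
Qed.

Lemma right_inverse_on_row n k J G (i : 'I_n) :
  val i \notin J -> row i (phimx n k (right_inverse_on n k J G)) = 0.
Proof.
by move=> iJ; apply/rowP => j; rewrite !mxE /sentry nth_mkseq // (negPf iJ) nth_nil phi0.
Qed.

Lemma SO_certificate_sound n k d G Js :
  SO_certificate zero one add mul inv n k d G Js -> exists_SO_code F n k d.
Proof.
case/and5P => k_gt0 d_gt0 /eqP weight_row0 /eqP gram /andP[/allP rinv avoid].
pose Gf := phimx k n G; pose i0 := Ordinal k_gt0.
apply: (@exists_SO_gen_code _ _ _ Gf d (row i0 Gf) d_gt0).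
- by apply/gen_codeP; exists (delta_mx 0 i0); rewrite -rowE.
- rewrite -count_support -weight_row0 -val_enum_ord !count_map.
  by apply: eq_count => j; rewrite /= !mxE phi_eq0.
- by rewrite -phimx_tr -phimx_mul gram phimx_zero.
move=> u low.
pose T := [seq (u *m Gf) 0 i != 0 | i <- enum 'I_n].
have nthT (i : 'I_n) : nth false T i = ((u *m Gf) 0 i != 0).
  by rewrite (nth_map i) ?size_enum_ord ?nth_ord_enum.
have sizeT : size T = n by rewrite size_map size_enum_ord.
have countT : (count id T <= d.-1)%N by rewrite count_support -ltnS prednK ?low.
have [_ /mapP[J JJs ->] avoidJ] := avoidingP avoid sizeT countT.
apply: (rinv_support_eq0 (G := Gf) (M := phimx n k (right_inverse_on n k J G))).
  by rewrite /Gf -phimx_mul (eqP (rinv J JJs)) phimx_id.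
move=> i uGi; apply: right_inverse_on_row.
by have := avoidJ i; rewrite nthT uGi /index_mask nth_mkseq // => /(_ isT).
Qed.

Lemma certified_SO_code codes (n k d : nat) :
  all (certified zero one add mul inv) codes ->
  (n, k, d) \in [seq c.1.1 | c <- codes] -> exists_SO_code F n k d.
Proof.
move=> /allP certs /mapP[[[[[n' k'] d'] G] Js] /certs cert [-> -> ->]].
exact: SO_certificate_sound cert.
Qed.

End Soundness.

(** * Models of GF(4) and GF(8) *)

(* (x0, x1) stands for x0 + x1 w, where w^2 = w + 1. *)
Definition gf4 := (bool * bool)%type.
Definition gf4_of_nat m : gf4 := (odd m, odd m./2).
Definition gf4_add (x y : gf4) : gf4 := (x.1 (+) y.1, x.2 (+) y.2).
Definition gf4_mul (x y : gf4) : gf4 :=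
  ((x.1 && y.1) (+) (x.2 && y.2), (x.1 && y.2) (+) (x.2 && y.1) (+) (x.2 && y.2)).
Definition gf4_inv (x : gf4) : gf4 := gf4_mul x x.

Lemma gf4_mulV x : x != (false, false) -> gf4_mul x (gf4_inv x) = (true, false).
Proof. by case: x => [[] []]. Qed.

(* (x0, x1, x2) stands for x0 + x1 a + x2 a^2, where a^3 = a + 1. *)
Definition gf8 := (bool * bool * bool)%type.
Definition gf8_of_nat m : gf8 := (odd m, odd m./2, odd m./2./2).
Definition gf8_add (x y : gf8) : gf8 := (x.1.1 (+) y.1.1, x.1.2 (+) y.1.2, x.2 (+) y.2).
Definition gf8_mul (x y : gf8) : gf8 :=
  let: (x0, x1, x2) := x in let: (y0, y1, y2) := y in
  ((x0 && y0) (+) (x1 && y2) (+) (x2 && y1),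
   (x0 && y1) (+) (x1 && y0) (+) (x1 && y2) (+) (x2 && y1) (+) (x2 && y2),
   (x0 && y2) (+) (x1 && y1) (+) (x2 && y0) (+) (x2 && y2)).
(* x^6 = x^-1, as x^7 = 1 for x != 0. *)
Definition gf8_inv (x : gf8) : gf8 :=
  let x2 := gf8_mul x x in gf8_mul x2 (gf8_mul x2 x2).

Lemma gf8_mulV x : x != (false, false, false) -> gf8_mul x (gf8_inv x) = (true, false, false).
Proof. by case: x => [[[] []] []]. Qed.

Section Char2.
Variables (F : fieldType) (char2 : 2 \in [pchar F]).

Lemma natr_addb (b c : bool) : (b (+) c)%:R = b%:R + c%:R :> F.
Proof. by case: b; case: c; rewrite ?addr0 ?add0r // -natrD (pcharf0 char2). Qed.

Lemma natr_andb (b c : bool) : (b && c)%:R = b%:R * c%:R :> F.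
Proof. by case: b; case: c; rewrite ?mulr1 ?mulr0. Qed.

Section GF4.
Variables (w : F) (w_root : w ^+ 2 + w + 1 = 0).

Definition gf4_to (x : gf4) : F := x.1%:R + x.2%:R * w.

Lemma gf4_toD : {morph gf4_to : x y / gf4_add x y >-> x + y}.
Proof. by move=> [x0 x1] [y0 y1]; rewrite /gf4_to /= !natr_addb; ring. Qed.

Lemma gf4_toM : {morph gf4_to : x y / gf4_mul x y >-> x * y}.
Proof.
move=> [x0 x1] [y0 y1]; rewrite /gf4_to /= !natr_addb !natr_andb.
set X0 := x0%:R; set X1 := x1%:R; set Y0 := y0%:R; set Y1 := y1%:R.
have -> : (X0 + X1 * w) * (Y0 + Y1 * w) =
  (X0 * Y0 + X1 * Y1) + (X0 * Y1 + X1 * Y0 + X1 * Y1) * w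
  + (w ^+ 2 + w + 1) * (X1 * Y1) - 2%:R * ((w + 1) * (X1 * Y1)) by ring.
by rewrite w_root (pcharf0 char2) !mul0r subr0 addr0.
Qed.

End GF4.

Section GF8.
Variables (a : F) (a_root : a ^+ 3 + a + 1 = 0).

Definition gf8_to (x : gf8) : F := x.1.1%:R + x.1.2%:R * a + x.2%:R * a ^+ 2.

Lemma gf8_toD : {morph gf8_to : x y / gf8_add x y >-> x + y}.
Proof. by move=> [[x0 x1] x2] [[y0 y1] y2]; rewrite /gf8_to /= !natr_addb; ring. Qed.

Lemma gf8_toM : {morph gf8_to : x y / gf8_mul x y >-> x * y}.
Proof.
move=> [[x0 x1] x2] [[y0 y1] y2]; rewrite /gf8_to /= !natr_addb !natr_andb.
set X0 := x0%:R; set X1 := x1%:R; set X2 := x2%:R.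
set Y0 := y0%:R; set Y1 := y1%:R; set Y2 := y2%:R.
have -> : (X0 + X1 * a + X2 * a ^+ 2) * (Y0 + Y1 * a + Y2 * a ^+ 2) =
  (X0 * Y0 + X1 * Y2 + X2 * Y1)
  + (X0 * Y1 + X1 * Y0 + X1 * Y2 + X2 * Y1 + X2 * Y2) * a
  + (X0 * Y2 + X1 * Y1 + X2 * Y0 + X2 * Y2) * a ^+ 2
  + (a ^+ 3 + a + 1) * (X1 * Y2 + X2 * Y1 + X2 * Y2 * a)
  - 2%:R * ((a + 1) * (X1 * Y2 + X2 * Y1 + X2 * Y2 * a)) by ring.
by rewrite a_root (pcharf0 char2) !mul0r subr0 addr0.
Qed.

End GF8.
End Char2.

Section FiniteFields.
Variable F : finFieldType.

Lemma exists_neq01 : (2 < #|F|)%N -> exists a : F, (a != 0) && (a != 1).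
Proof.
move=> F_gt2; apply/existsP; apply: contraLR F_gt2 => /existsPn no_a.
rewrite -leqNgt -cardsT (leq_trans (subset_leq_card (_ : _ \subset [set 0; 1]))) //.
  by apply/subsetP => x _; move: (no_a x); rewrite !inE negb_and !negbK.
by rewrite cards2; case: (_ != _).
Qed.

Lemma card4_root : #|F| = 4 -> exists w : F, w ^+ 2 + w + 1 = 0.
Proof.
move=> F4; have [w /andP[w0 w1]] := exists_neq01 (ltac:(by rewrite F4)).
exists w; apply/eqP; move: (expf_card w) => /eqP.
rewrite -subr_eq0 (_ : _ - w = w * (w - 1) * (w ^+ 2 + w + 1)); last by rewrite F4; ring.
by rewrite !mulf_eq0 subr_eq0 (negPf w0) (negPf w1).
Qed.

(* In characteristic 2, X^8 - X = X (X - 1) (X^3 + X + 1) (X^3 + X^2 + 1), and the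
   second cubic is the reciprocal of the first. *)
Lemma card8_root : #|F| = 8 -> exists a : F, a ^+ 3 + a + 1 = 0.
Proof.
move=> F8; have char2 : 2 \in [pchar F] by apply: (@card_finPcharP F 2 3).
have [b /andP[b0 b1]] := exists_neq01 (ltac:(by rewrite F8)).
have : b * (b - 1) * (b ^+ 3 + b + 1) * (b ^+ 3 + b ^+ 2 + 1) = 0.
  rewrite (_ : _ * _ = b ^+ #|F| - b + 2%:R * (b ^+ 3 * (b - 1) * b)); last by rewrite F8; ring.
  by rewrite (pcharf0 char2) mul0r addr0 expf_card subrr.
move/eqP; rewrite !mulf_eq0 subr_eq0 (negPf b0) (negPf b1) /= => /orP[/eqP b_root | /eqP b_coroot].
  by exists b.
exists b^-1.
have -> : b^-1 ^+ 3 + b^-1 + 1 = (b ^+ 3 + b ^+ 2 + 1) * b^-1 ^+ 3 by field.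
by rewrite b_coroot mul0r.
Qed.

End FiniteFields.

Definition gf4_matrix := map (map gf4_of_nat).
Definition gf8_matrix := map (map gf8_of_nat).

Definition gf4_codes : seq (nat * nat * nat * seq (seq gf4) * seq (seq nat)) := [::
  (8, 2, 4,
   gf4_matrix [:: [:: 3; 0; 1; 3; 0; 1; 0; 0]; [:: 3; 2; 2; 0; 0; 0; 0; 3]],
   [:: [:: 0; 2]; [:: 1; 5]; [:: 3; 7]; [:: 1; 3]; [:: 2; 7]; [:: 0; 5]; [:: 2; 5]; [:: 0; 1]]);
  (8, 3, 4,
   gf4_matrix [:: [:: 3; 0; 3; 3; 0; 0; 0; 3]; [:: 3; 0; 3; 1; 1; 1; 0; 1];
     [:: 2; 3; 1; 0; 3; 2; 2; 3]],
   [:: [:: 0; 6; 7]; [:: 3; 4; 5]; [:: 1; 2; 3]; [:: 0; 1; 5]; [:: 2; 4; 7]; [:: 2; 5; 6];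
    [:: 0; 1; 4]; [:: 0; 2; 3]; [:: 1; 5; 7]; [:: 3; 4; 7]]);
  (8, 4, 4,
   gf4_matrix [:: [:: 1; 3; 3; 1; 0; 0; 0; 0]; [:: 2; 2; 3; 1; 3; 0; 3; 2];
     [:: 2; 0; 2; 3; 0; 2; 3; 2]; [:: 0; 1; 1; 0; 2; 1; 1; 2]],
   [:: [:: 2; 4; 5; 6]; [:: 1; 3; 5; 7]; [:: 1; 2; 3; 4]; [:: 0; 3; 4; 6]; [:: 0; 2; 3; 7];
    [:: 0; 5; 6; 7]; [:: 1; 2; 6; 7]; [:: 0; 1; 4; 7]; [:: 0; 1; 2; 5]; [:: 0; 3; 4; 5];
    [:: 2; 3; 5; 6]; [:: 3; 4; 6; 7]; [:: 0; 1; 3; 6]; [:: 1; 4; 5; 6]; [:: 2; 4; 5; 7];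
    [:: 0; 2; 4; 6]])].

Definition gf8_codes : seq (nat * nat * nat * seq (seq gf8) * seq (seq nat)) := [::
  (8, 3, 4,
   gf8_matrix [:: [:: 2; 6; 6; 2; 0; 0; 0; 0]; [:: 2; 4; 1; 6; 6; 4; 4; 7];
     [:: 4; 1; 7; 5; 1; 3; 5; 0]],
   [:: [:: 2; 3; 7]; [:: 0; 1; 5]; [:: 2; 4; 6]; [:: 1; 4; 7]; [:: 0; 3; 6]; [:: 3; 4; 5];
    [:: 2; 5; 7]; [:: 1; 5; 6]; [:: 0; 1; 2]; [:: 0; 4; 7]]);
  (8, 4, 4,
   gf8_matrix [:: [:: 1; 7; 0; 0; 0; 0; 4; 2]; [:: 5; 5; 4; 1; 1; 0; 0; 4];
     [:: 5; 6; 5; 5; 7; 7; 2; 1]; [:: 5; 3; 5; 7; 5; 1; 2; 2]],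
   [:: [:: 3; 4; 5; 6]; [:: 0; 2; 5; 6]; [:: 0; 2; 3; 7]; [:: 1; 2; 6; 7]; [:: 1; 4; 5; 7];
    [:: 1; 2; 3; 4]; [:: 0; 1; 3; 5]; [:: 0; 1; 4; 6]; [:: 0; 5; 6; 7]; [:: 0; 2; 4; 5];
    [:: 2; 4; 6; 7]; [:: 0; 3; 4; 7]; [:: 2; 3; 5; 7]; [:: 1; 3; 6; 7]; [:: 1; 2; 5; 6];
    [:: 0; 2; 3; 6]; [:: 0; 1; 2; 7]]);
  (10, 4, 5,
   gf8_matrix [:: [:: 0; 5; 0; 7; 4; 3; 0; 0; 0; 5];
     [:: 1; 3; 7; 7; 0; 6; 5; 2; 4; 7]; [:: 6; 3; 6; 0; 6; 0; 0; 5; 2; 2];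
     [:: 0; 0; 2; 2; 2; 4; 4; 6; 6; 2]],
   [:: [:: 0; 5; 7; 9]; [:: 0; 1; 3; 4]; [:: 2; 4; 6; 9]; [:: 1; 5; 6; 8]; [:: 2; 3; 7; 8];
    [:: 1; 2; 5; 7]; [:: 0; 3; 8; 9]; [:: 4; 6; 7; 8]; [:: 3; 5; 6; 9]; [:: 0; 2; 4; 5];
    [:: 1; 4; 8; 9]; [:: 0; 3; 6; 7]; [:: 0; 1; 2; 6]; [:: 1; 2; 3; 9]; [:: 3; 4; 5; 8];
    [:: 2; 7; 8; 9]; [:: 1; 4; 6; 7]; [:: 0; 2; 5; 8]; [:: 0; 1; 7; 8]; [:: 2; 3; 4; 6];
    [:: 3; 4; 7; 9]; [:: 0; 4; 5; 6]; [:: 1; 3; 8; 9]; [:: 1; 4; 7; 9]]);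
  (10, 5, 4,
   gf8_matrix [:: [:: 0; 5; 2; 0; 0; 0; 4; 0; 3; 0];
     [:: 0; 1; 0; 7; 6; 5; 6; 2; 0; 1]; [:: 2; 0; 6; 4; 1; 4; 1; 2; 1; 7];
     [:: 5; 0; 4; 3; 3; 6; 6; 6; 2; 5]; [:: 1; 6; 7; 3; 3; 7; 2; 7; 3; 1]],
   [:: [:: 0; 1; 4; 5; 9]; [:: 2; 3; 6; 7; 9]; [:: 0; 5; 6; 7; 8]; [:: 0; 1; 2; 3; 8];
    [:: 1; 2; 4; 5; 6]; [:: 3; 4; 7; 8; 9]; [:: 2; 4; 6; 8; 9]; [:: 0; 2; 4; 5; 7];
    [:: 0; 3; 5; 6; 9]; [:: 1; 2; 5; 8; 9]; [:: 0; 1; 3; 4; 6]; [:: 1; 3; 5; 7; 8];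
    [:: 0; 1; 2; 7; 9]; [:: 1; 4; 6; 7; 8]; [:: 0; 2; 3; 5; 8]; [:: 1; 3; 4; 5; 9];
    [:: 0; 2; 3; 6; 7]; [:: 2; 4; 5; 6; 8]; [:: 0; 6; 7; 8; 9]]);
  (12, 4, 6,
   gf8_matrix [:: [:: 3; 5; 0; 6; 1; 0; 0; 0; 0; 6; 7; 0];
     [:: 4; 6; 2; 1; 5; 4; 6; 5; 5; 0; 1; 7]; [:: 5; 5; 3; 7; 5; 4; 6; 5; 7; 1; 6; 6];
     [:: 3; 7; 2; 5; 3; 0; 4; 3; 7; 6; 4; 2]],
   [:: [:: 1; 7; 9; 11]; [:: 2; 3; 6; 10]; [:: 0; 4; 5; 9]; [:: 0; 1; 8; 10]; [:: 3; 5; 8; 11];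
    [:: 4; 6; 7; 8]; [:: 0; 2; 7; 11]; [:: 1; 2; 4; 5]; [:: 0; 3; 6; 9]; [:: 3; 4; 7; 10];
    [:: 2; 8; 9; 10]; [:: 5; 6; 10; 11]; [:: 0; 1; 2; 9]; [:: 1; 3; 5; 7]; [:: 1; 4; 6; 11];
    [:: 2; 3; 4; 8]; [:: 5; 6; 8; 9]; [:: 4; 9; 10; 11]; [:: 0; 5; 7; 10]; [:: 1; 3; 6; 8];
    [:: 2; 4; 6; 7]; [:: 7; 8; 10; 11]; [:: 3; 5; 9; 11]; [:: 0; 3; 4; 11]; [:: 0; 5; 6; 8];
    [:: 1; 4; 9; 10]; [:: 1; 2; 5; 6]; [:: 2; 4; 8; 11]; [:: 0; 1; 3; 10]; [:: 0; 5; 7; 8];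
    [:: 4; 7; 8; 9]; [:: 3; 7; 8; 11]]);
  (12, 5, 6,
   gf8_matrix [:: [:: 0; 0; 0; 3; 0; 2; 6; 6; 0; 2; 3; 0];
     [:: 7; 0; 2; 1; 5; 6; 0; 5; 6; 3; 6; 1]; [:: 3; 2; 4; 4; 1; 4; 2; 1; 2; 0; 3; 6];
     [:: 2; 7; 7; 5; 0; 0; 1; 7; 5; 1; 5; 0]; [:: 7; 5; 2; 3; 5; 2; 0; 7; 2; 6; 7; 0]],
   [:: [:: 0; 2; 5; 9; 11]; [:: 0; 1; 3; 8; 10]; [:: 0; 4; 7; 10; 11]; [:: 0; 1; 6; 7; 9];
    [:: 3; 4; 6; 9; 10]; [:: 2; 3; 4; 5; 7]; [:: 2; 6; 8; 10; 11]; [:: 1; 5; 7; 8; 11];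
    [:: 0; 4; 5; 6; 8]; [:: 1; 2; 4; 8; 9]; [:: 3; 7; 8; 9; 11]; [:: 1; 3; 4; 6; 11];
    [:: 1; 2; 5; 6; 10]; [:: 5; 7; 8; 9; 10]; [:: 0; 2; 3; 6; 7]; [:: 1; 3; 9; 10; 11];
    [:: 1; 2; 4; 7; 10]; [:: 0; 3; 5; 6; 11]; [:: 0; 1; 4; 5; 9]; [:: 4; 5; 8; 10; 11];
    [:: 2; 3; 5; 8; 9]; [:: 4; 5; 6; 7; 9]; [:: 0; 1; 2; 7; 11]; [:: 3; 5; 6; 7; 10];
    [:: 2; 6; 7; 9; 11]; [:: 0; 2; 3; 4; 10]; [:: 0; 6; 8; 9; 10]; [:: 1; 3; 6; 7; 8];
    [:: 0; 3; 4; 8; 11]; [:: 0; 1; 2; 5; 8]; [:: 0; 4; 7; 8; 9]; [:: 2; 4; 5; 6; 11];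
    [:: 0; 2; 5; 7; 10]; [:: 1; 2; 3; 6; 9]; [:: 1; 3; 4; 5; 10]; [:: 0; 1; 6; 10; 11];
    [:: 2; 3; 7; 10; 11]; [:: 2; 7; 8; 9; 10]; [:: 1; 5; 6; 8; 9]; [:: 1; 3; 5; 7; 9];
    [:: 0; 2; 4; 6; 9]; [:: 1; 4; 6; 7; 8]; [:: 1; 4; 9; 10; 11]; [:: 0; 1; 3; 4; 7];
    [:: 0; 1; 8; 9; 11]; [:: 2; 4; 6; 8; 10]; [:: 0; 3; 5; 10; 11]; [:: 2; 3; 4; 9; 11];
    [:: 1; 2; 3; 8; 11]; [:: 0; 5; 6; 7; 8]; [:: 3; 6; 7; 8; 11]; [:: 5; 6; 9; 10; 11];
    [:: 0; 4; 5; 7; 10]; [:: 0; 1; 2; 4; 5]; [:: 2; 4; 5; 7; 11]; [:: 3; 4; 5; 9; 11];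
    [:: 3; 4; 7; 8; 10]; [:: 1; 5; 7; 10; 11]; [:: 0; 2; 4; 6; 8]; [:: 0; 2; 3; 8; 11];
    [:: 6; 7; 9; 10; 11]; [:: 0; 2; 3; 5; 10]; [:: 0; 2; 4; 8; 10]; [:: 1; 2; 3; 7; 10];
    [:: 3; 4; 6; 7; 9]; [:: 1; 3; 5; 6; 10]; [:: 1; 3; 4; 6; 8]; [:: 1; 5; 6; 7; 11];
    [:: 0; 1; 2; 7; 8]; [:: 0; 2; 6; 10; 11]; [:: 1; 2; 5; 10; 11]; [:: 0; 4; 5; 8; 10]]);
  (12, 6, 5,
   gf8_matrix [:: [:: 0; 0; 5; 0; 7; 1; 2; 0; 0; 0; 1; 0];
     [:: 4; 1; 6; 3; 7; 5; 7; 5; 1; 6; 0; 7]; [:: 6; 1; 3; 4; 6; 7; 5; 1; 2; 6; 6; 7];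
     [:: 7; 3; 5; 0; 2; 5; 2; 5; 2; 3; 3; 3]; [:: 0; 2; 7; 0; 7; 1; 2; 1; 1; 6; 0; 7];
     [:: 1; 3; 7; 2; 5; 2; 2; 5; 5; 4; 6; 0]],
   [:: [:: 0; 3; 4; 5; 10; 11]; [:: 1; 3; 7; 8; 9; 10]; [:: 0; 1; 3; 4; 6; 9];
    [:: 1; 2; 4; 5; 9; 10]; [:: 0; 2; 6; 7; 8; 11]; [:: 4; 5; 6; 7; 8; 9]; [:: 1; 4; 6; 8; 10; 11];
    [:: 2; 3; 5; 6; 9; 11]; [:: 0; 1; 5; 8; 9; 11]; [:: 2; 3; 4; 6; 7; 10]; [:: 0; 1; 2; 3; 5; 7];
    [:: 0; 2; 7; 9; 10; 11]; [:: 0; 2; 6; 8; 9; 10]; [:: 1; 2; 3; 4; 8; 11];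
    [:: 0; 1; 5; 6; 7; 10]; [:: 3; 5; 7; 8; 10; 11]; [:: 0; 3; 4; 5; 6; 8]; [:: 1; 4; 5; 7; 9; 11];
    [:: 1; 2; 3; 6; 10; 11]; [:: 0; 1; 2; 4; 7; 8]; [:: 0; 3; 4; 7; 8; 11]; [:: 0; 2; 4; 5; 6; 11];
    [:: 1; 3; 5; 6; 9; 10]; [:: 4; 6; 7; 9; 10; 11]; [:: 1; 2; 6; 7; 8; 9]; [:: 0; 3; 5; 6; 7; 9];
    [:: 0; 2; 3; 5; 8; 10]; [:: 2; 3; 4; 8; 9; 10]; [:: 1; 2; 5; 7; 10; 11];
    [:: 0; 4; 5; 7; 8; 10]; [:: 2; 3; 4; 7; 9; 11]; [:: 5; 6; 8; 9; 10; 11];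
    [:: 0; 1; 3; 9; 10; 11]; [:: 1; 2; 4; 5; 6; 8]; [:: 1; 3; 5; 6; 7; 11]; [:: 0; 1; 2; 6; 9; 11];
    [:: 1; 3; 4; 5; 8; 9]; [:: 0; 2; 3; 4; 6; 10]; [:: 0; 1; 3; 4; 7; 10]; [:: 0; 1; 6; 7; 8; 11];
    [:: 2; 4; 5; 8; 10; 11]; [:: 0; 2; 4; 5; 7; 9]; [:: 3; 6; 7; 8; 9; 10]; [:: 0; 1; 2; 6; 7; 10];
    [:: 0; 2; 3; 8; 9; 11]; [:: 0; 1; 4; 8; 9; 10]; [:: 1; 2; 3; 7; 8; 10]; [:: 0; 1; 5; 6; 8; 11];
    [:: 1; 2; 3; 5; 8; 9]; [:: 1; 3; 4; 6; 7; 9]; [:: 2; 3; 4; 6; 7; 11]; [:: 0; 3; 4; 6; 8; 9];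
    [:: 1; 2; 7; 8; 9; 10]; [:: 0; 1; 4; 5; 9; 11]; [:: 1; 3; 4; 6; 7; 10];
    [:: 0; 2; 3; 5; 6; 11]]);
  (14, 5, 7,
   gf8_matrix [:: [:: 4; 0; 7; 3; 0; 0; 0; 0; 5; 1; 3; 0; 7; 0];
     [:: 6; 6; 0; 5; 5; 5; 6; 3; 4; 3; 5; 6; 6; 2]; [:: 5; 1; 3; 0; 6; 5; 3; 3; 1; 5; 6; 3; 4; 1];
     [:: 3; 5; 1; 5; 6; 0; 5; 1; 6; 2; 1; 2; 5; 2]; [:: 5; 7; 3; 6; 4; 6; 6; 5; 4; 3; 3; 2; 2; 2]],
   [:: [:: 4; 6; 7; 9; 12]; [:: 1; 2; 4; 8; 10]; [:: 0; 5; 6; 11; 13]; [:: 0; 1; 2; 3; 7];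
    [:: 3; 9; 10; 11; 13]; [:: 1; 5; 8; 11; 12]; [:: 0; 5; 9; 10; 12]; [:: 3; 4; 5; 7; 8];
    [:: 2; 6; 8; 12; 13]; [:: 0; 1; 4; 9; 13]; [:: 1; 6; 7; 10; 11]; [:: 2; 3; 5; 6; 9];
    [:: 0; 3; 4; 11; 12]; [:: 2; 7; 8; 9; 11]; [:: 2; 5; 7; 10; 13]; [:: 0; 3; 6; 8; 10];
    [:: 1; 3; 5; 12; 13]; [:: 2; 4; 10; 11; 12]; [:: 0; 1; 6; 8; 9]; [:: 0; 7; 10; 12; 13];
    [:: 1; 3; 4; 6; 13]; [:: 4; 7; 8; 11; 13]; [:: 0; 2; 4; 5; 6]; [:: 1; 3; 9; 10; 12];
    [:: 5; 8; 9; 10; 13]; [:: 1; 2; 9; 11; 13]; [:: 3; 6; 7; 11; 12]; [:: 0; 2; 3; 4; 9];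
    [:: 3; 5; 8; 11; 13]; [:: 1; 2; 5; 7; 12]; [:: 0; 5; 7; 9; 11]; [:: 4; 5; 6; 10; 12];
    [:: 0; 2; 8; 11; 12]; [:: 4; 6; 8; 9; 11]; [:: 0; 1; 4; 10; 11]; [:: 0; 6; 7; 9; 13];
    [:: 1; 7; 8; 9; 13]; [:: 2; 3; 5; 10; 11]; [:: 0; 4; 8; 12; 13]; [:: 4; 5; 7; 9; 10];
    [:: 2; 3; 4; 7; 13]; [:: 0; 2; 6; 10; 12]; [:: 3; 7; 8; 9; 10]; [:: 0; 1; 4; 6; 7];
    [:: 0; 1; 3; 5; 8]; [:: 1; 10; 11; 12; 13]; [:: 0; 2; 4; 11; 13]; [:: 1; 2; 3; 6; 8];
    [:: 5; 6; 7; 8; 12]; [:: 2; 5; 9; 12; 13]; [:: 0; 2; 7; 8; 10]; [:: 1; 2; 5; 6; 11];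
    [:: 1; 3; 4; 9; 11]; [:: 0; 1; 5; 10; 13]; [:: 1; 4; 7; 8; 12]; [:: 3; 6; 9; 12; 13];
    [:: 2; 3; 8; 10; 13]; [:: 2; 6; 9; 10; 11]; [:: 1; 3; 5; 6; 9]; [:: 0; 3; 7; 8; 12];
    [:: 1; 2; 6; 9; 10]; [:: 0; 3; 4; 5; 10]; [:: 0; 1; 2; 9; 12]; [:: 4; 6; 8; 10; 11];
    [:: 1; 7; 11; 12; 13]; [:: 3; 4; 5; 9; 12]; [:: 2; 4; 8; 9; 13]; [:: 0; 2; 3; 7; 11];
    [:: 2; 5; 6; 7; 13]; [:: 6; 7; 10; 12; 13]; [:: 0; 1; 8; 11; 13]; [:: 0; 4; 5; 7; 8];
    [:: 3; 4; 5; 7; 13]; [:: 1; 3; 7; 10; 12]; [:: 0; 8; 9; 11; 12]; [:: 0; 2; 8; 9; 11];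
    [:: 1; 4; 6; 9; 13]; [:: 3; 5; 6; 11; 12]; [:: 0; 3; 6; 10; 11]; [:: 1; 2; 4; 10; 13];
    [:: 4; 5; 6; 8; 9]; [:: 2; 3; 4; 6; 10]; [:: 1; 5; 6; 10; 13]; [:: 1; 3; 4; 8; 13];
    [:: 0; 6; 11; 12; 13]; [:: 0; 2; 3; 5; 13]; [:: 0; 1; 5; 9; 11]]);
  (14, 6, 6,
   gf8_matrix [:: [:: 0; 2; 4; 0; 0; 0; 0; 7; 5; 3; 0; 0; 0; 7];
     [:: 7; 4; 5; 2; 0; 5; 2; 3; 3; 7; 7; 0; 1; 2]; [:: 4; 4; 0; 7; 2; 3; 5; 2; 4; 5; 1; 6; 7; 0];
     [:: 7; 5; 2; 6; 7; 3; 3; 3; 0; 4; 0; 4; 3; 1]; [:: 7; 0; 6; 3; 6; 1; 1; 6; 5; 1; 7; 7; 4; 2];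
     [:: 0; 7; 3; 7; 5; 6; 0; 5; 5; 6; 6; 6; 5; 3]],
   [:: [:: 1; 2; 4; 5; 8; 13]; [:: 1; 4; 6; 10; 11; 12]; [:: 3; 5; 7; 10; 12; 13];
    [:: 0; 3; 8; 9; 11; 12]; [:: 0; 2; 5; 6; 9; 10]; [:: 3; 4; 6; 7; 9; 13];
    [:: 0; 1; 2; 7; 11; 13]; [:: 2; 6; 7; 8; 9; 12]; [:: 2; 3; 4; 8; 10; 11];
    [:: 0; 1; 3; 5; 6; 8]; [:: 1; 4; 5; 7; 9; 11]; [:: 0; 1; 9; 10; 12; 13];
    [:: 0; 2; 4; 5; 7; 12]; [:: 5; 6; 8; 11; 12; 13]; [:: 0; 4; 7; 8; 10; 13];
    [:: 1; 2; 3; 7; 9; 10]; [:: 2; 4; 9; 11; 12; 13]; [:: 2; 3; 5; 6; 7; 11];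
    [:: 0; 2; 3; 4; 6; 13]; [:: 1; 3; 8; 10; 11; 13]; [:: 0; 6; 7; 9; 10; 11];
    [:: 3; 4; 5; 8; 9; 10]; [:: 0; 1; 4; 6; 8; 9]; [:: 0; 1; 3; 4; 7; 12]; [:: 1; 2; 5; 8; 10; 12];
    [:: 1; 5; 6; 7; 10; 13]; [:: 1; 3; 5; 9; 11; 12]; [:: 2; 3; 6; 10; 12; 13];
    [:: 0; 2; 5; 8; 9; 13]; [:: 0; 5; 7; 8; 10; 11]; [:: 3; 4; 6; 7; 8; 12];
    [:: 0; 3; 4; 5; 10; 13]; [:: 1; 2; 3; 6; 9; 13]; [:: 4; 7; 8; 9; 12; 13];
    [:: 2; 7; 8; 9; 11; 13]; [:: 0; 2; 6; 8; 11; 12]; [:: 0; 1; 6; 7; 12; 13];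
    [:: 1; 2; 3; 4; 5; 12]; [:: 2; 4; 5; 6; 10; 11]; [:: 0; 5; 6; 9; 11; 13];
    [:: 5; 6; 7; 9; 10; 12]; [:: 0; 2; 4; 9; 10; 12]; [:: 0; 1; 2; 3; 7; 8];
    [:: 0; 3; 4; 7; 11; 13]; [:: 4; 6; 8; 10; 12; 13]; [:: 1; 6; 8; 9; 10; 11];
    [:: 1; 2; 6; 7; 11; 12]; [:: 0; 1; 4; 5; 8; 11]; [:: 1; 2; 4; 6; 7; 10]; [:: 0; 3; 4; 5; 6; 9];
    [:: 0; 3; 6; 7; 8; 10]; [:: 0; 1; 2; 10; 11; 13]; [:: 1; 3; 4; 8; 12; 13];
    [:: 2; 3; 5; 8; 11; 12]; [:: 0; 3; 5; 7; 9; 13]; [:: 0; 2; 7; 10; 11; 12];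
    [:: 1; 2; 3; 4; 9; 11]; [:: 1; 4; 7; 10; 11; 12]; [:: 3; 5; 6; 8; 9; 13];
    [:: 1; 4; 5; 6; 12; 13]; [:: 2; 4; 5; 7; 10; 11]; [:: 0; 1; 7; 8; 9; 11];
    [:: 5; 9; 10; 11; 12; 13]; [:: 4; 5; 6; 7; 8; 11]; [:: 0; 1; 3; 6; 10; 12];
    [:: 3; 6; 7; 9; 11; 12]; [:: 1; 3; 5; 7; 8; 12]; [:: 0; 4; 5; 7; 10; 12];
    [:: 0; 2; 3; 8; 9; 10]; [:: 1; 2; 4; 5; 6; 9]; [:: 3; 4; 6; 9; 10; 11];
    [:: 2; 6; 7; 8; 10; 13]; [:: 0; 2; 3; 5; 6; 12]; [:: 1; 4; 5; 7; 9; 10];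
    [:: 0; 4; 8; 10; 11; 12]; [:: 0; 2; 3; 4; 7; 8]; [:: 3; 6; 8; 9; 10; 12];
    [:: 2; 3; 6; 8; 11; 13]; [:: 0; 2; 6; 8; 9; 13]; [:: 0; 1; 4; 11; 12; 13];
    [:: 1; 3; 4; 7; 10; 11]]);
  (14, 7, 6,
   gf8_matrix [:: [:: 0; 0; 6; 0; 6; 6; 0; 5; 0; 4; 0; 7; 0; 0];
     [:: 7; 6; 3; 6; 7; 3; 4; 0; 1; 2; 7; 1; 5; 4]; [:: 2; 4; 0; 4; 4; 2; 1; 2; 7; 0; 7; 7; 5; 5];
     [:: 7; 1; 1; 2; 4; 0; 3; 4; 1; 7; 4; 0; 4; 0]; [:: 3; 3; 7; 3; 3; 6; 1; 1; 5; 7; 1; 7; 5; 0];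
     [:: 6; 6; 3; 0; 4; 1; 3; 2; 0; 1; 0; 1; 4; 3]; [:: 2; 3; 1; 3; 5; 7; 3; 2; 2; 3; 3; 1; 5; 6]],
   [:: [:: 0; 4; 7; 8; 9; 10; 13]; [:: 1; 2; 3; 7; 9; 10; 13]; [:: 2; 3; 6; 8; 9; 11; 12];
    [:: 0; 1; 2; 5; 6; 8; 13]; [:: 1; 4; 7; 8; 9; 11; 12]; [:: 0; 3; 5; 6; 8; 10; 12];
    [:: 0; 1; 3; 6; 9; 12; 13]; [:: 0; 1; 3; 4; 5; 8; 9]; [:: 2; 5; 7; 8; 10; 11; 13];
    [:: 3; 4; 5; 9; 11; 12; 13]; [:: 1; 2; 4; 5; 9; 10; 12]; [:: 0; 1; 5; 7; 9; 10; 11];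
    [:: 0; 1; 2; 3; 4; 10; 11]; [:: 1; 2; 3; 4; 6; 7; 8]; [:: 1; 5; 6; 7; 11; 12; 13];
    [:: 3; 4; 5; 6; 7; 10; 11]; [:: 0; 2; 3; 5; 7; 9; 12]; [:: 0; 1; 4; 6; 7; 10; 12];
    [:: 1; 4; 6; 8; 10; 11; 13]; [:: 0; 2; 6; 9; 10; 11; 13]; [:: 0; 2; 4; 5; 8; 11; 12];
    [:: 3; 5; 6; 7; 8; 9; 13]; [:: 0; 3; 7; 10; 11; 12; 13]; [:: 0; 2; 3; 4; 5; 7; 13];
    [:: 0; 1; 2; 7; 8; 10; 12]; [:: 1; 2; 4; 5; 6; 9; 11]; [:: 0; 3; 4; 6; 7; 9; 11];
    [:: 2; 4; 6; 7; 10; 12; 13]; [:: 1; 5; 8; 9; 10; 12; 13]; [:: 1; 2; 3; 4; 8; 12; 13];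
    [:: 2; 3; 4; 5; 8; 9; 10]; [:: 0; 1; 2; 8; 9; 11; 13]; [:: 1; 3; 5; 8; 10; 11; 12];
    [:: 0; 4; 5; 6; 9; 12; 13]; [:: 2; 3; 5; 6; 10; 12; 13]; [:: 0; 5; 6; 8; 9; 10; 11];
    [:: 1; 3; 6; 7; 8; 9; 10]; [:: 0; 1; 3; 5; 6; 11; 12]; [:: 1; 3; 4; 5; 7; 10; 13];
    [:: 0; 2; 6; 7; 8; 12; 13]; [:: 1; 2; 6; 9; 10; 11; 12]; [:: 2; 4; 7; 9; 11; 12; 13];
    [:: 1; 2; 3; 6; 7; 11; 13]; [:: 0; 2; 4; 6; 8; 10; 12]; [:: 0; 1; 4; 10; 11; 12; 13];
    [:: 1; 2; 5; 6; 7; 8; 12]; [:: 3; 4; 8; 9; 10; 11; 13]; [:: 0; 2; 3; 7; 8; 9; 11];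
    [:: 4; 5; 6; 7; 9; 10; 12]; [:: 0; 2; 3; 5; 6; 7; 10]; [:: 3; 4; 5; 7; 8; 12; 13];
    [:: 0; 1; 3; 5; 9; 11; 13]; [:: 0; 1; 4; 6; 7; 8; 11]; [:: 1; 3; 4; 6; 9; 10; 13];
    [:: 0; 1; 2; 5; 7; 12; 13]; [:: 2; 4; 5; 6; 8; 9; 13]; [:: 0; 5; 7; 8; 9; 11; 12];
    [:: 0; 3; 6; 8; 10; 11; 13]; [:: 1; 2; 3; 4; 5; 6; 12]; [:: 2; 3; 7; 8; 10; 11; 12];
    [:: 0; 1; 3; 4; 7; 9; 12]; [:: 3; 6; 7; 9; 10; 11; 12]; [:: 1; 2; 3; 5; 8; 11; 13];
    [:: 0; 2; 3; 9; 10; 12; 13]; [:: 0; 1; 2; 4; 5; 8; 10]; [:: 0; 1; 3; 7; 8; 10; 13];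
    [:: 1; 2; 4; 6; 7; 9; 10]; [:: 0; 2; 3; 4; 5; 6; 11]; [:: 3; 4; 6; 8; 11; 12; 13];
    [:: 0; 2; 5; 6; 7; 11; 13]; [:: 0; 1; 5; 6; 7; 8; 9]; [:: 0; 1; 6; 8; 9; 11; 12];
    [:: 2; 4; 5; 10; 11; 12; 13]; [:: 1; 4; 5; 7; 9; 11; 13]; [:: 6; 7; 8; 9; 10; 12; 13];
    [:: 0; 3; 4; 9; 10; 11; 12]; [:: 0; 1; 2; 4; 6; 10; 13]; [:: 0; 1; 2; 3; 7; 11; 12];
    [:: 0; 4; 5; 8; 10; 11; 13]; [:: 4; 5; 6; 7; 8; 11; 12]; [:: 1; 2; 3; 6; 8; 9; 10];
    [:: 2; 3; 5; 9; 10; 11; 13]; [:: 0; 2; 4; 6; 7; 8; 9]; [:: 0; 1; 4; 5; 8; 12; 13];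
    [:: 0; 3; 4; 6; 7; 12; 13]; [:: 0; 4; 5; 7; 9; 10; 13]; [:: 1; 5; 6; 7; 8; 10; 11];
    [:: 0; 1; 2; 3; 5; 9; 10]; [:: 0; 2; 3; 5; 8; 12; 13]; [:: 2; 5; 7; 9; 10; 11; 12];
    [:: 1; 2; 5; 7; 8; 9; 13]; [:: 1; 3; 7; 8; 11; 12; 13]; [:: 1; 2; 8; 10; 11; 12; 13];
    [:: 2; 3; 4; 7; 8; 11; 13]; [:: 1; 3; 4; 6; 8; 10; 12]; [:: 1; 2; 6; 7; 9; 12; 13];
    [:: 1; 2; 4; 6; 11; 12; 13]; [:: 0; 3; 4; 5; 7; 8; 10]; [:: 1; 2; 4; 5; 7; 10; 11];
    [:: 0; 5; 6; 10; 11; 12; 13]; [:: 2; 3; 5; 6; 7; 9; 11]; [:: 5; 6; 8; 9; 11; 12; 13];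
    [:: 0; 2; 3; 4; 8; 9; 13]; [:: 0; 2; 5; 8; 9; 10; 12]; [:: 3; 4; 5; 6; 8; 9; 12];
    [:: 0; 1; 3; 5; 6; 7; 13]; [:: 0; 1; 2; 3; 6; 8; 11]; [:: 2; 4; 6; 7; 9; 10; 11];
    [:: 3; 5; 7; 8; 9; 10; 12]; [:: 0; 1; 4; 5; 6; 10; 11]; [:: 1; 2; 3; 4; 5; 7; 12];
    [:: 0; 1; 7; 9; 10; 11; 13]; [:: 4; 5; 6; 7; 8; 10; 13]; [:: 0; 1; 2; 3; 4; 9; 12];
    [:: 0; 4; 7; 8; 10; 11; 12]; [:: 1; 3; 6; 8; 9; 11; 13]; [:: 0; 4; 8; 9; 10; 12; 13];
    [:: 0; 3; 5; 6; 9; 10; 13]; [:: 0; 1; 2; 4; 7; 9; 12]; [:: 2; 3; 4; 7; 9; 10; 12];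
    [:: 1; 2; 3; 7; 10; 12; 13]; [:: 1; 3; 5; 6; 9; 10; 12]; [:: 1; 2; 5; 9; 11; 12; 13];
    [:: 0; 1; 2; 4; 7; 8; 11]; [:: 0; 2; 6; 7; 10; 11; 12]; [:: 1; 3; 7; 8; 9; 10; 11];
    [:: 2; 4; 5; 6; 8; 10; 11]; [:: 0; 1; 2; 6; 7; 9; 10]; [:: 0; 4; 7; 8; 9; 11; 13];
    [:: 1; 4; 6; 7; 9; 11; 12]; [:: 1; 4; 6; 7; 8; 9; 13]; [:: 2; 3; 5; 8; 9; 11; 12];
    [:: 2; 3; 6; 7; 8; 9; 13]; [:: 0; 2; 3; 6; 7; 8; 12]; [:: 0; 1; 3; 5; 10; 12; 13];
    [:: 2; 4; 7; 8; 10; 12; 13]; [:: 0; 2; 3; 4; 7; 9; 10]; [:: 1; 3; 4; 9; 10; 11; 12];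
    [:: 2; 3; 4; 5; 6; 7; 13]; [:: 0; 1; 4; 5; 6; 8; 13]; [:: 0; 1; 3; 8; 9; 12; 13];
    [:: 1; 2; 6; 8; 9; 10; 13]; [:: 2; 3; 6; 9; 11; 12; 13]; [:: 0; 3; 4; 5; 7; 11; 12];
    [:: 0; 1; 4; 5; 8; 9; 12]; [:: 0; 2; 4; 6; 8; 10; 11]; [:: 4; 5; 6; 9; 10; 11; 12];
    [:: 1; 3; 6; 7; 10; 11; 12]; [:: 1; 3; 5; 6; 7; 8; 12]; [:: 3; 4; 5; 6; 8; 9; 11];
    [:: 0; 1; 2; 4; 6; 7; 13]; [:: 0; 2; 3; 10; 11; 12; 13]; [:: 0; 1; 6; 7; 10; 12; 13];
    [:: 1; 3; 5; 7; 10; 11; 13]; [:: 0; 1; 2; 3; 4; 5; 9]; [:: 1; 2; 4; 5; 8; 11; 13];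
    [:: 0; 5; 7; 8; 9; 10; 13]; [:: 3; 5; 6; 8; 11; 12; 13]; [:: 0; 3; 4; 6; 7; 11; 13];
    [:: 2; 4; 5; 6; 8; 10; 13]; [:: 0; 1; 2; 5; 6; 9; 12]; [:: 0; 1; 2; 8; 10; 11; 12];
    [:: 0; 2; 7; 9; 10; 12; 13]; [:: 0; 1; 2; 4; 5; 11; 12]; [:: 0; 1; 2; 3; 6; 11; 13];
    [:: 0; 2; 5; 7; 8; 10; 11]; [:: 0; 2; 4; 6; 8; 9; 13]; [:: 4; 7; 9; 10; 11; 12; 13];
    [:: 0; 3; 5; 6; 9; 11; 12]; [:: 0; 3; 4; 6; 8; 9; 10]; [:: 1; 2; 4; 5; 10; 11; 13];
    [:: 0; 5; 8; 10; 11; 12; 13]; [:: 1; 2; 7; 8; 10; 11; 13]; [:: 2; 3; 4; 5; 6; 10; 12];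
    [:: 0; 3; 6; 8; 9; 11; 13]; [:: 1; 4; 7; 8; 10; 12; 13]; [:: 4; 6; 8; 9; 10; 12; 13];
    [:: 1; 3; 4; 5; 6; 7; 13]; [:: 0; 2; 3; 4; 7; 8; 13]; [:: 1; 3; 4; 5; 7; 8; 9];
    [:: 1; 2; 6; 7; 8; 11; 12]; [:: 0; 1; 2; 3; 6; 8; 12]; [:: 3; 4; 5; 10; 11; 12; 13];
    [:: 1; 2; 3; 5; 7; 8; 13]; [:: 1; 2; 5; 7; 10; 11; 13]; [:: 0; 1; 5; 6; 7; 9; 10];
    [:: 1; 3; 4; 7; 9; 11; 13]; [:: 1; 5; 6; 8; 9; 12; 13]; [:: 2; 4; 5; 6; 7; 11; 12];
    [:: 0; 1; 3; 4; 8; 11; 13]; [:: 0; 2; 4; 7; 8; 9; 13]]);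
  (16, 5, 8,
   gf8_matrix [:: [:: 2; 3; 0; 0; 0; 0; 0; 7; 0; 3; 7; 6; 3; 7; 0; 0];
     [:: 2; 4; 2; 6; 0; 6; 7; 0; 2; 3; 7; 1; 4; 6; 3; 5];
     [:: 0; 5; 2; 1; 3; 3; 7; 1; 2; 7; 5; 6; 6; 6; 0; 6];
     [:: 4; 5; 3; 7; 2; 6; 2; 0; 4; 6; 6; 1; 3; 4; 7; 6];
     [:: 6; 4; 3; 0; 4; 1; 1; 5; 2; 4; 0; 1; 5; 7; 4; 1]],
   [:: [:: 0; 7; 8; 9; 10]; [:: 3; 4; 6; 13; 15]; [:: 1; 2; 5; 11; 12]; [:: 4; 5; 7; 12; 14];
    [:: 9; 10; 11; 13; 14]; [:: 1; 2; 3; 8; 14]; [:: 0; 5; 6; 9; 15]; [:: 2; 4; 6; 7; 11];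
    [:: 0; 3; 8; 12; 13]; [:: 0; 1; 4; 10; 15]; [:: 7; 8; 11; 13; 15]; [:: 1; 3; 5; 6; 10];
    [:: 2; 10; 12; 14; 15]; [:: 4; 6; 8; 9; 12]; [:: 1; 2; 7; 9; 13]; [:: 0; 3; 7; 11; 14];
    [:: 2; 4; 5; 10; 13]; [:: 0; 1; 6; 13; 14]; [:: 5; 6; 8; 11; 14]; [:: 0; 2; 3; 4; 9];
    [:: 1; 6; 7; 12; 15]; [:: 3; 9; 10; 11; 15]; [:: 2; 3; 5; 7; 15]; [:: 0; 1; 4; 8; 11];
    [:: 1; 5; 9; 14; 15]; [:: 3; 5; 9; 12; 13]; [:: 0; 2; 6; 8; 10]; [:: 1; 8; 10; 12; 13];
    [:: 0; 4; 11; 12; 13]; [:: 3; 4; 7; 10; 14]; [:: 2; 6; 9; 12; 14]; [:: 0; 5; 8; 12; 15];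
    [:: 3; 6; 10; 11; 12]; [:: 2; 4; 8; 9; 15]; [:: 0; 5; 7; 10; 13]; [:: 1; 3; 7; 8; 9];
    [:: 0; 2; 5; 11; 14]; [:: 1; 4; 6; 9; 11]; [:: 4; 8; 13; 14; 15]; [:: 2; 3; 8; 11; 13];
    [:: 6; 7; 9; 10; 15]; [:: 1; 11; 12; 14; 15]; [:: 0; 1; 3; 7; 12]; [:: 4; 5; 8; 10; 11];
    [:: 5; 6; 7; 13; 14]; [:: 1; 2; 7; 10; 11]; [:: 0; 5; 8; 9; 13]; [:: 0; 2; 3; 6; 15];
    [:: 5; 7; 9; 11; 12]; [:: 1; 4; 9; 10; 12]; [:: 0; 3; 4; 5; 14]; [:: 1; 2; 5; 6; 8];
    [:: 0; 2; 12; 13; 15]; [:: 3; 8; 10; 14; 15]; [:: 1; 3; 4; 11; 13]; [:: 2; 7; 8; 12; 14];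
    [:: 0; 4; 6; 10; 14]; [:: 0; 4; 7; 11; 15]; [:: 3; 6; 7; 9; 13]; [:: 2; 3; 8; 10; 12];
    [:: 6; 8; 11; 12; 15]; [:: 1; 5; 10; 13; 15]; [:: 0; 1; 5; 6; 7]; [:: 2; 3; 5; 9; 14];
    [:: 0; 8; 9; 12; 14]; [:: 1; 2; 6; 10; 13]; [:: 2; 4; 5; 6; 12]; [:: 1; 2; 4; 7; 8];
    [:: 3; 7; 9; 14; 15]; [:: 6; 7; 11; 12; 13]; [:: 0; 2; 9; 11; 15]; [:: 3; 5; 7; 10; 12];
    [:: 0; 3; 6; 8; 11]; [:: 9; 10; 12; 13; 15]; [:: 0; 2; 10; 13; 14]; [:: 1; 6; 8; 11; 14];
    [:: 4; 5; 9; 11; 14]; [:: 1; 3; 4; 14; 15]; [:: 3; 11; 13; 14; 15]; [:: 0; 2; 4; 7; 14];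
    [:: 1; 4; 5; 8; 13]; [:: 0; 1; 9; 11; 12]; [:: 2; 5; 8; 9; 10]; [:: 4; 7; 8; 10; 15];
    [:: 2; 3; 4; 11; 12]; [:: 1; 5; 7; 8; 14]; [:: 0; 3; 6; 10; 13]; [:: 4; 6; 8; 13; 14];
    [:: 1; 3; 5; 11; 15]; [:: 0; 2; 5; 9; 12]; [:: 2; 5; 6; 13; 15]; [:: 4; 6; 10; 11; 14];
    [:: 0; 4; 9; 13; 15]; [:: 0; 3; 9; 10; 11]; [:: 1; 3; 6; 8; 15]; [:: 0; 6; 7; 9; 14];
    [:: 4; 7; 8; 11; 12]; [:: 1; 5; 10; 12; 14]; [:: 1; 2; 4; 6; 14]; [:: 0; 1; 3; 8; 13];
    [:: 0; 6; 7; 10; 12]; [:: 3; 6; 9; 11; 15]; [:: 1; 8; 9; 11; 13]; [:: 2; 4; 13; 14; 15];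
    [:: 3; 9; 10; 14; 15]; [:: 0; 3; 6; 7; 8]; [:: 5; 11; 12; 13; 14]; [:: 2; 7; 10; 12; 13];
    [:: 3; 6; 9; 11; 13]; [:: 6; 7; 9; 10; 11]]);
  (16, 6, 8,
   gf8_matrix [:: [:: 7; 0; 0; 7; 6; 2; 5; 4; 4; 0; 0; 0; 0; 1; 0; 0];
     [:: 2; 4; 6; 6; 4; 7; 5; 0; 1; 7; 6; 2; 6; 2; 2; 4];
     [:: 7; 2; 7; 6; 7; 4; 5; 7; 6; 6; 4; 3; 5; 3; 4; 0];
     [:: 1; 7; 5; 1; 4; 2; 6; 2; 4; 4; 7; 0; 2; 7; 1; 3];
     [:: 7; 3; 5; 3; 2; 5; 1; 6; 0; 2; 1; 1; 7; 7; 0; 0];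
     [:: 2; 3; 2; 0; 4; 3; 0; 5; 7; 3; 5; 7; 1; 5; 5; 6]],
   [:: [:: 0; 2; 6; 8; 9; 15]; [:: 0; 1; 10; 11; 12; 15]; [:: 0; 3; 5; 6; 11; 13];
    [:: 2; 4; 5; 7; 12; 13]; [:: 1; 4; 6; 8; 11; 14]; [:: 3; 5; 7; 9; 10; 15];
    [:: 0; 2; 3; 4; 10; 14]; [:: 6; 9; 10; 12; 13; 14]; [:: 1; 2; 7; 13; 14; 15];
    [:: 0; 3; 7; 8; 12; 14]; [:: 2; 5; 8; 9; 10; 11]; [:: 1; 3; 4; 6; 7; 9];
    [:: 1; 5; 8; 9; 12; 13]; [:: 0; 4; 8; 10; 13; 15]; [:: 0; 5; 7; 9; 11; 14];
    [:: 3; 4; 5; 12; 14; 15]; [:: 1; 5; 6; 7; 8; 10]; [:: 4; 6; 7; 11; 12; 15];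
    [:: 1; 2; 3; 11; 12; 13]; [:: 0; 1; 2; 4; 5; 15]; [:: 3; 8; 9; 11; 13; 15];
    [:: 0; 2; 6; 7; 10; 12]; [:: 3; 7; 10; 11; 13; 14]; [:: 2; 4; 8; 9; 12; 14];
    [:: 1; 2; 3; 6; 10; 15]; [:: 0; 1; 7; 9; 10; 13]; [:: 1; 2; 3; 5; 8; 14];
    [:: 3; 4; 8; 10; 11; 12]; [:: 0; 5; 6; 10; 14; 15]; [:: 2; 3; 5; 6; 9; 12];
    [:: 1; 4; 9; 10; 14; 15]; [:: 2; 3; 4; 7; 8; 15]; [:: 4; 5; 6; 8; 13; 14];
    [:: 1; 3; 4; 5; 10; 13]; [:: 0; 2; 11; 13; 14; 15]; [:: 1; 2; 6; 7; 9; 11];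
    [:: 0; 1; 6; 8; 12; 13]; [:: 0; 1; 4; 7; 8; 11]; [:: 1; 5; 10; 11; 12; 14];
    [:: 2; 4; 6; 9; 10; 13]; [:: 0; 5; 7; 8; 12; 15]; [:: 0; 1; 3; 4; 9; 12];
    [:: 3; 6; 9; 11; 14; 15]; [:: 2; 8; 10; 12; 14; 15]; [:: 0; 2; 3; 7; 9; 13];
    [:: 0; 1; 4; 6; 7; 14]; [:: 1; 4; 5; 11; 13; 15]; [:: 3; 6; 8; 12; 13; 15];
    [:: 6; 7; 8; 10; 11; 13]; [:: 0; 2; 4; 9; 11; 12]; [:: 0; 3; 5; 8; 9; 10];
    [:: 1; 5; 6; 9; 12; 15]; [:: 1; 3; 5; 7; 11; 12]; [:: 0; 1; 3; 13; 14; 15];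
    [:: 2; 5; 6; 8; 11; 15]; [:: 4; 5; 7; 8; 10; 14]; [:: 1; 7; 8; 9; 14; 15];
    [:: 0; 8; 9; 11; 13; 14]; [:: 4; 7; 10; 12; 13; 15]; [:: 0; 2; 5; 10; 11; 13];
    [:: 2; 3; 4; 6; 11; 14]; [:: 0; 1; 2; 9; 10; 14]; [:: 2; 5; 6; 7; 13; 15];
    [:: 0; 4; 6; 7; 9; 15]; [:: 0; 1; 3; 6; 8; 11]; [:: 2; 3; 5; 9; 13; 14];
    [:: 1; 2; 8; 10; 12; 13]; [:: 4; 7; 9; 11; 12; 13]; [:: 3; 6; 7; 8; 13; 14];
    [:: 2; 7; 10; 11; 14; 15]; [:: 1; 3; 6; 10; 12; 14]; [:: 0; 1; 2; 3; 5; 7];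
    [:: 3; 4; 5; 8; 9; 11]; [:: 6; 9; 10; 11; 12; 15]; [:: 0; 3; 4; 6; 7; 10];
    [:: 2; 4; 6; 12; 13; 14]; [:: 0; 5; 6; 9; 12; 13]; [:: 2; 7; 8; 9; 10; 12];
    [:: 0; 2; 5; 8; 11; 12]; [:: 5; 11; 12; 13; 14; 15]; [:: 2; 3; 4; 9; 10; 11];
    [:: 0; 4; 5; 7; 13; 14]; [:: 1; 6; 9; 11; 13; 14]; [:: 2; 7; 9; 12; 14; 15];
    [:: 1; 2; 4; 6; 8; 13]; [:: 1; 4; 6; 8; 9; 10]; [:: 1; 3; 7; 10; 11; 15];
    [:: 0; 1; 2; 3; 12; 15]; [:: 5; 6; 7; 8; 12; 14]; [:: 0; 4; 5; 9; 11; 15];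
    [:: 0; 4; 8; 10; 12; 14]; [:: 3; 5; 6; 10; 11; 14]; [:: 2; 4; 5; 6; 9; 14];
    [:: 2; 5; 9; 10; 13; 15]; [:: 1; 2; 4; 7; 11; 14]; [:: 1; 4; 5; 7; 10; 12];
    [:: 1; 2; 8; 9; 11; 15]; [:: 3; 8; 10; 13; 14; 15]; [:: 1; 3; 7; 8; 9; 13];
    [:: 0; 2; 6; 7; 11; 14]; [:: 0; 3; 4; 6; 12; 15]; [:: 0; 1; 6; 9; 13; 15];
    [:: 3; 4; 11; 12; 13; 14]; [:: 0; 1; 5; 8; 14; 15]; [:: 0; 3; 7; 10; 12; 15];
    [:: 0; 3; 9; 10; 11; 14]; [:: 0; 2; 3; 6; 8; 13]; [:: 4; 5; 7; 8; 9; 13];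
    [:: 0; 1; 7; 11; 12; 13]; [:: 2; 3; 5; 10; 12; 13]; [:: 0; 1; 2; 4; 6; 12];
    [:: 3; 5; 7; 8; 11; 13]; [:: 0; 1; 5; 6; 10; 11]; [:: 6; 7; 10; 13; 14; 15];
    [:: 1; 4; 8; 12; 13; 15]; [:: 0; 6; 7; 8; 9; 11]; [:: 1; 2; 4; 10; 11; 13];
    [:: 3; 8; 9; 11; 12; 14]; [:: 0; 5; 9; 10; 12; 14]; [:: 0; 2; 7; 8; 10; 15];
    [:: 3; 4; 6; 11; 13; 15]; [:: 4; 5; 6; 8; 12; 15]; [:: 1; 3; 7; 12; 13; 14];
    [:: 1; 2; 8; 9; 13; 14]; [:: 2; 3; 4; 5; 6; 7]; [:: 5; 8; 10; 11; 13; 15];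
    [:: 1; 2; 6; 12; 14; 15]; [:: 5; 6; 7; 9; 10; 13]; [:: 3; 4; 8; 9; 14; 15];
    [:: 0; 1; 5; 6; 9; 14]; [:: 1; 2; 3; 4; 5; 9]; [:: 0; 2; 6; 10; 11; 15];
    [:: 0; 9; 10; 11; 12; 13]; [:: 7; 8; 10; 11; 12; 14]; [:: 0; 3; 5; 6; 8; 15];
    [:: 1; 2; 5; 10; 11; 15]; [:: 0; 4; 5; 7; 10; 11]; [:: 0; 1; 4; 5; 13; 14];
    [:: 1; 7; 9; 12; 13; 15]; [:: 0; 1; 3; 7; 8; 10]; [:: 0; 2; 5; 12; 14; 15];
    [:: 2; 3; 6; 7; 9; 14]; [:: 0; 3; 4; 9; 10; 13]; [:: 1; 3; 4; 11; 14; 15];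
    [:: 4; 6; 9; 10; 11; 14]; [:: 0; 4; 7; 11; 13; 15]; [:: 0; 1; 2; 5; 8; 13];
    [:: 0; 3; 5; 6; 7; 12]; [:: 2; 4; 7; 8; 14; 15]; [:: 1; 4; 5; 8; 9; 12];
    [:: 3; 4; 7; 10; 12; 14]; [:: 3; 4; 5; 6; 8; 10]; [:: 2; 9; 11; 12; 13; 15];
    [:: 1; 3; 6; 8; 11; 12]; [:: 1; 5; 6; 7; 13; 15]; [:: 0; 4; 8; 9; 12; 15];
    [:: 2; 5; 7; 10; 13; 14]; [:: 0; 1; 6; 11; 12; 14]; [:: 1; 3; 5; 9; 11; 13];
    [:: 0; 2; 3; 4; 8; 11]; [:: 2; 3; 7; 10; 11; 12]; [:: 0; 8; 10; 11; 13; 14];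
    [:: 1; 2; 5; 9; 12; 14]; [:: 2; 3; 8; 9; 12; 15]; [:: 1; 2; 3; 9; 10; 13];
    [:: 4; 5; 6; 7; 9; 11]; [:: 3; 4; 5; 13; 14; 15]; [:: 0; 1; 2; 4; 7; 13];
    [:: 4; 6; 7; 9; 12; 13]; [:: 0; 1; 3; 7; 9; 15]; [:: 2; 4; 5; 7; 9; 15];
    [:: 2; 6; 11; 12; 13; 14]; [:: 0; 1; 2; 5; 10; 12]; [:: 2; 4; 5; 8; 11; 12];
    [:: 8; 9; 10; 12; 14; 15]; [:: 0; 6; 7; 11; 12; 13]; [:: 2; 3; 7; 8; 14; 15];
    [:: 1; 2; 4; 10; 12; 15]; [:: 0; 3; 4; 5; 11; 12]; [:: 6; 7; 8; 9; 13; 15];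
    [:: 0; 4; 8; 10; 11; 14]; [:: 0; 3; 12; 13; 14; 15]; [:: 0; 2; 3; 8; 10; 12];
    [:: 0; 1; 6; 10; 14; 15]; [:: 0; 1; 3; 6; 13; 14]; [:: 0; 2; 3; 5; 9; 15];
    [:: 1; 3; 5; 8; 13; 15]; [:: 5; 7; 9; 10; 11; 14]; [:: 1; 2; 4; 7; 8; 10];
    [:: 2; 8; 9; 11; 13; 14]; [:: 0; 2; 4; 7; 9; 14]; [:: 0; 4; 5; 8; 10; 13];
    [:: 1; 3; 9; 11; 12; 15]; [:: 1; 7; 8; 11; 13; 15]; [:: 4; 8; 9; 12; 13; 14];
    [:: 2; 4; 5; 6; 10; 14]; [:: 1; 3; 6; 10; 11; 12]; [:: 1; 5; 9; 10; 14; 15];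
    [:: 3; 6; 7; 8; 12; 15]; [:: 1; 3; 5; 6; 11; 14]; [:: 1; 5; 7; 8; 12; 14];
    [:: 4; 5; 10; 12; 13; 15]; [:: 1; 3; 4; 6; 9; 15]; [:: 0; 1; 6; 8; 9; 12];
    [:: 2; 3; 8; 10; 11; 14]; [:: 0; 2; 6; 7; 13; 14]; [:: 4; 6; 11; 12; 13; 14];
    [:: 0; 2; 4; 6; 8; 12]; [:: 1; 5; 6; 8; 11; 13]; [:: 3; 6; 8; 9; 10; 11];
    [:: 0; 2; 5; 7; 11; 15]; [:: 0; 3; 4; 6; 7; 11]; [:: 3; 6; 7; 10; 12; 13];
    [:: 2; 3; 4; 9; 13; 14]; [:: 0; 3; 5; 8; 12; 14]; [:: 0; 1; 3; 4; 8; 15];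
    [:: 0; 5; 7; 8; 9; 10]; [:: 4; 7; 9; 11; 12; 15]; [:: 1; 4; 6; 7; 10; 15];
    [:: 2; 6; 9; 10; 14; 15]; [:: 1; 2; 5; 6; 11; 12]; [:: 0; 1; 2; 3; 11; 13];
    [:: 0; 3; 4; 5; 7; 9]; [:: 2; 4; 6; 8; 9; 11]; [:: 0; 2; 4; 12; 13; 14];
    [:: 2; 4; 10; 11; 12; 13]; [:: 1; 3; 5; 6; 12; 13]; [:: 0; 1; 7; 9; 11; 14];
    [:: 3; 5; 6; 7; 9; 15]; [:: 0; 1; 5; 7; 14; 15]; [:: 1; 4; 7; 10; 13; 14];
    [:: 0; 2; 5; 8; 12; 13]; [:: 2; 8; 10; 13; 14; 15]; [:: 2; 3; 5; 7; 10; 14];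
    [:: 2; 3; 4; 7; 13; 15]; [:: 2; 3; 5; 6; 10; 11]; [:: 5; 8; 9; 10; 13; 14];
    [:: 0; 3; 8; 10; 14; 15]; [:: 2; 3; 7; 11; 12; 14]; [:: 0; 3; 4; 5; 6; 13];
    [:: 0; 3; 9; 10; 13; 15]; [:: 4; 7; 8; 9; 10; 13]; [:: 0; 6; 8; 9; 11; 14];
    [:: 5; 6; 7; 8; 11; 15]; [:: 5; 8; 12; 13; 14; 15]; [:: 4; 6; 7; 9; 12; 15];
    [:: 0; 1; 7; 8; 11; 12]; [:: 0; 1; 2; 5; 7; 9]; [:: 1; 6; 7; 10; 11; 12];
    [:: 1; 2; 7; 9; 10; 11]; [:: 2; 4; 5; 6; 11; 13]; [:: 1; 3; 4; 7; 8; 9];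
    [:: 2; 6; 7; 9; 11; 15]; [:: 3; 7; 8; 11; 12; 13]; [:: 0; 2; 5; 8; 9; 15];
    [:: 0; 1; 2; 4; 9; 14]; [:: 5; 8; 9; 10; 11; 12]; [:: 1; 4; 5; 9; 10; 11];
    [:: 1; 4; 5; 7; 12; 13]; [:: 3; 5; 7; 9; 11; 12]; [:: 0; 1; 11; 12; 14; 15];
    [:: 8; 10; 12; 13; 14; 15]; [:: 1; 3; 9; 10; 13; 14]; [:: 3; 4; 6; 9; 11; 13];
    [:: 3; 5; 7; 9; 14; 15]; [:: 0; 3; 4; 7; 8; 15]; [:: 1; 2; 6; 9; 10; 14];
    [:: 2; 3; 6; 8; 11; 15]; [:: 1; 3; 6; 7; 8; 14]; [:: 0; 1; 3; 10; 11; 13];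
    [:: 1; 3; 7; 10; 12; 15]; [:: 0; 4; 5; 10; 12; 15]; [:: 2; 5; 6; 7; 9; 11];
    [:: 2; 5; 7; 10; 11; 14]; [:: 4; 6; 7; 12; 13; 14]; [:: 2; 4; 5; 11; 14; 15];
    [:: 0; 5; 6; 7; 13; 14]; [:: 2; 3; 8; 9; 13; 15]; [:: 0; 6; 8; 10; 11; 13];
    [:: 3; 4; 10; 11; 14; 15]; [:: 2; 3; 9; 10; 12; 14]]);
  (16, 7, 6,
   gf8_matrix [:: [:: 1; 6; 0; 0; 5; 4; 0; 0; 0; 0; 5; 0; 3; 0; 0; 0];
     [:: 4; 7; 5; 6; 0; 7; 1; 6; 6; 1; 0; 0; 6; 5; 2; 6];
     [:: 3; 2; 3; 0; 2; 4; 6; 2; 7; 4; 4; 0; 6; 6; 2; 5];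
     [:: 0; 0; 6; 3; 2; 7; 6; 2; 1; 6; 4; 6; 7; 0; 4; 2];
     [:: 2; 0; 6; 0; 5; 4; 6; 4; 1; 4; 0; 1; 1; 7; 2; 7];
     [:: 7; 1; 7; 5; 0; 3; 7; 3; 0; 3; 1; 1; 1; 0; 1; 0];
     [:: 2; 3; 7; 3; 6; 3; 3; 4; 6; 2; 5; 1; 0; 6; 3; 2]],
   [:: [:: 3; 4; 8; 9; 12; 14; 15]; [:: 0; 1; 2; 7; 9; 10; 14]; [:: 1; 3; 5; 6; 7; 11; 13];
    [:: 2; 4; 8; 10; 11; 12; 13]; [:: 0; 5; 6; 7; 8; 12; 15]; [:: 0; 2; 6; 11; 13; 14; 15];
    [:: 0; 3; 4; 5; 6; 9; 10]; [:: 1; 2; 3; 5; 10; 12; 15]; [:: 1; 4; 5; 7; 11; 14; 15];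
    [:: 0; 2; 3; 7; 8; 9; 11]; [:: 1; 2; 4; 6; 9; 12; 13]; [:: 1; 8; 9; 10; 11; 13; 15];
    [:: 0; 3; 7; 10; 12; 13; 14]; [:: 2; 5; 6; 8; 9; 13; 14]; [:: 0; 1; 4; 6; 8; 10; 14];
    [:: 6; 7; 9; 10; 11; 12; 14]; [:: 2; 4; 5; 7; 10; 13; 15]; [:: 0; 1; 4; 5; 9; 11; 12];
    [:: 2; 3; 6; 7; 8; 10; 15]; [:: 0; 1; 3; 5; 8; 12; 13]; [:: 0; 3; 5; 10; 11; 14; 15];
    [:: 3; 4; 6; 8; 11; 13; 15]; [:: 1; 3; 4; 7; 9; 13; 14]; [:: 1; 2; 5; 8; 11; 12; 14];
    [:: 2; 3; 4; 5; 6; 7; 12]; [:: 0; 1; 7; 9; 12; 13; 15]; [:: 0; 1; 2; 4; 8; 9; 15];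
    [:: 1; 2; 3; 4; 6; 10; 11]; [:: 0; 4; 5; 7; 8; 11; 13]; [:: 3; 6; 9; 10; 11; 12; 13];
    [:: 5; 7; 8; 9; 10; 14; 15]; [:: 0; 2; 4; 10; 12; 14; 15]; [:: 0; 2; 3; 5; 9; 13; 15];
    [:: 1; 3; 6; 8; 12; 14; 15]; [:: 4; 5; 6; 10; 12; 13; 15]; [:: 1; 3; 7; 8; 10; 11; 12];
    [:: 2; 4; 6; 7; 9; 11; 14]; [:: 1; 5; 6; 7; 8; 10; 13]; [:: 0; 2; 3; 8; 11; 13; 14];
    [:: 1; 5; 6; 9; 11; 14; 15]; [:: 1; 2; 4; 7; 8; 12; 15]; [:: 0; 3; 4; 6; 7; 9; 15];
    [:: 2; 3; 5; 7; 9; 12; 14]; [:: 3; 4; 5; 8; 10; 13; 14]; [:: 0; 2; 5; 6; 7; 10; 12];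
    [:: 5; 6; 8; 9; 11; 12; 15]; [:: 0; 1; 3; 6; 13; 14; 15]; [:: 0; 4; 7; 8; 9; 10; 12];
    [:: 1; 2; 7; 11; 12; 13; 14]; [:: 0; 1; 6; 8; 9; 12; 14]; [:: 0; 4; 9; 11; 13; 14; 15];
    [:: 0; 1; 7; 8; 10; 11; 15]; [:: 2; 3; 4; 5; 11; 12; 15]; [:: 0; 1; 2; 5; 9; 11; 13];
    [:: 0; 3; 5; 6; 8; 11; 14]; [:: 1; 3; 4; 7; 10; 12; 15]; [:: 1; 2; 3; 4; 5; 7; 8];
    [:: 0; 2; 6; 8; 12; 13; 15]; [:: 2; 3; 10; 11; 13; 14; 15]; [:: 5; 7; 9; 11; 12; 13; 15];
    [:: 0; 2; 3; 8; 9; 10; 14]; [:: 1; 4; 5; 10; 11; 13; 14]; [:: 1; 2; 4; 6; 9; 10; 15];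
    [:: 2; 7; 8; 10; 12; 13; 14]; [:: 0; 1; 3; 4; 9; 10; 13]; [:: 3; 4; 6; 7; 11; 12; 14];
    [:: 2; 4; 5; 6; 8; 10; 11]; [:: 0; 2; 4; 6; 7; 13; 15]; [:: 1; 4; 5; 6; 9; 12; 14];
    [:: 1; 2; 3; 7; 9; 11; 15]; [:: 3; 6; 7; 9; 10; 13; 14]; [:: 0; 4; 6; 7; 8; 12; 13];
    [:: 0; 2; 5; 9; 10; 12; 14]; [:: 0; 1; 2; 3; 7; 14; 15]; [:: 0; 1; 3; 5; 8; 10; 11];
    [:: 1; 4; 6; 7; 9; 13; 15]; [:: 0; 4; 8; 12; 13; 14; 15]; [:: 0; 2; 3; 5; 7; 10; 11];
    [:: 1; 6; 7; 8; 9; 10; 11]; [:: 0; 1; 2; 3; 6; 10; 13]; [:: 1; 3; 6; 9; 10; 12; 15];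
    [:: 5; 6; 11; 12; 13; 14; 15]; [:: 2; 3; 5; 8; 9; 11; 13]; [:: 0; 4; 5; 6; 11; 12; 14];
    [:: 0; 5; 8; 9; 11; 13; 15]; [:: 1; 6; 7; 10; 13; 14; 15]; [:: 0; 2; 3; 9; 11; 12; 15];
    [:: 0; 5; 7; 8; 9; 11; 12]; [:: 5; 8; 9; 10; 12; 14; 15]; [:: 6; 7; 8; 9; 11; 12; 14];
    [:: 1; 2; 4; 7; 9; 12; 13]; [:: 1; 2; 3; 4; 8; 9; 10]; [:: 1; 2; 3; 9; 12; 13; 15]]);
  (16, 8, 6,
   gf8_matrix [:: [:: 0; 3; 0; 0; 1; 6; 0; 0; 3; 2; 0; 0; 0; 0; 0; 5];
     [:: 4; 5; 7; 6; 3; 2; 1; 6; 6; 5; 3; 7; 6; 5; 2; 0];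
     [:: 3; 0; 2; 0; 5; 7; 2; 7; 5; 5; 2; 7; 3; 7; 4; 3];
     [:: 7; 3; 2; 0; 2; 3; 4; 1; 1; 3; 6; 3; 4; 7; 0; 6];
     [:: 6; 6; 0; 4; 5; 3; 0; 4; 4; 3; 6; 0; 7; 5; 6; 3];
     [:: 1; 7; 0; 2; 5; 5; 1; 2; 0; 6; 2; 0; 7; 7; 5; 6];
     [:: 2; 7; 1; 4; 2; 1; 0; 6; 6; 6; 3; 0; 0; 3; 5; 0];
     [:: 1; 6; 6; 3; 5; 7; 2; 0; 2; 7; 2; 7; 2; 2; 4; 6]],
   [:: [:: 0; 1; 4; 5; 9; 10; 12; 14]; [:: 0; 1; 3; 6; 8; 10; 13; 15];
    [:: 3; 4; 8; 9; 11; 13; 14; 15]; [:: 0; 1; 2; 3; 7; 9; 12; 15]; [:: 1; 2; 3; 4; 5; 7; 8; 13];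
    [:: 0; 5; 6; 7; 8; 9; 13; 14]; [:: 5; 7; 8; 9; 10; 11; 12; 15];
    [:: 1; 2; 6; 8; 10; 11; 12; 14]; [:: 0; 2; 3; 4; 6; 7; 10; 11];
    [:: 2; 4; 5; 6; 10; 12; 13; 15]; [:: 1; 4; 7; 11; 12; 13; 14; 15];
    [:: 1; 3; 5; 6; 7; 9; 11; 14]; [:: 0; 2; 3; 5; 11; 12; 14; 15]; [:: 0; 1; 2; 5; 9; 10; 11; 13];
    [:: 3; 6; 7; 9; 10; 12; 13; 14]; [:: 2; 4; 5; 6; 8; 9; 11; 15]; [:: 0; 2; 4; 7; 8; 10; 12; 14];
    [:: 0; 1; 5; 6; 7; 8; 12; 15]; [:: 1; 2; 6; 7; 9; 10; 14; 15]; [:: 0; 1; 3; 4; 8; 11; 12; 13];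
    [:: 2; 3; 5; 7; 10; 13; 14; 15]; [:: 3; 4; 5; 6; 8; 9; 10; 12]; [:: 0; 4; 6; 7; 9; 11; 12; 13];
    [:: 0; 2; 7; 8; 11; 13; 14; 15]; [:: 0; 1; 4; 6; 9; 13; 14; 15]; [:: 0; 2; 3; 5; 8; 9; 12; 13];
    [:: 1; 2; 3; 6; 11; 12; 13; 15]; [:: 1; 3; 4; 7; 8; 9; 10; 11];
    [:: 3; 4; 5; 6; 10; 11; 13; 14]; [:: 1; 3; 5; 8; 10; 12; 14; 15];
    [:: 2; 3; 4; 5; 6; 7; 12; 14]; [:: 0; 2; 3; 4; 9; 10; 13; 15]; [:: 0; 3; 5; 7; 8; 10; 11; 14];
    [:: 2; 4; 9; 10; 11; 12; 13; 14]; [:: 0; 1; 2; 3; 6; 8; 9; 11]; [:: 1; 4; 5; 6; 7; 10; 11; 12];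
    [:: 0; 1; 7; 8; 9; 10; 12; 13]; [:: 1; 2; 4; 5; 6; 8; 13; 14]; [:: 0; 1; 3; 4; 10; 11; 14; 15];
    [:: 0; 4; 5; 6; 7; 9; 10; 15]; [:: 0; 3; 4; 6; 7; 8; 12; 15]; [:: 2; 6; 7; 8; 10; 11; 13; 15];
    [:: 1; 2; 4; 7; 8; 9; 12; 15]; [:: 0; 5; 6; 8; 10; 11; 12; 13]; [:: 0; 1; 2; 3; 5; 6; 10; 14];
    [:: 1; 3; 5; 6; 9; 12; 13; 15]; [:: 0; 2; 4; 5; 8; 9; 14; 15]; [:: 2; 5; 6; 9; 11; 13; 14; 15];
    [:: 0; 3; 5; 7; 11; 12; 13; 15]; [:: 0; 4; 6; 8; 9; 11; 12; 14];
    [:: 1; 4; 7; 8; 10; 13; 14; 15]; [:: 0; 1; 2; 4; 5; 7; 9; 11]; [:: 1; 2; 3; 4; 9; 11; 12; 14];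
    [:: 2; 3; 6; 8; 12; 13; 14; 15]; [:: 1; 2; 4; 6; 7; 9; 10; 13]; [:: 0; 1; 2; 3; 7; 11; 13; 14];
    [:: 0; 2; 6; 8; 9; 10; 12; 15]; [:: 2; 5; 7; 8; 9; 11; 12; 14];
    [:: 0; 1; 2; 5; 12; 13; 14; 15]; [:: 0; 1; 9; 10; 11; 12; 14; 15];
    [:: 0; 3; 4; 6; 8; 10; 13; 14]; [:: 2; 3; 4; 5; 8; 10; 11; 12];
    [:: 3; 4; 7; 9; 10; 11; 12; 15]; [:: 0; 1; 3; 4; 7; 8; 9; 14]; [:: 1; 3; 7; 8; 9; 11; 13; 15];
    [:: 0; 1; 5; 6; 8; 11; 14; 15]; [:: 0; 1; 4; 5; 7; 10; 11; 13]; [:: 2; 3; 5; 6; 8; 9; 10; 13];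
    [:: 0; 2; 6; 7; 11; 12; 14; 15]; [:: 2; 3; 8; 9; 10; 11; 14; 15];
    [:: 1; 2; 3; 5; 6; 7; 11; 15]; [:: 1; 5; 6; 7; 8; 12; 13; 14]; [:: 1; 4; 6; 8; 9; 10; 11; 15];
    [:: 0; 1; 3; 4; 5; 9; 12; 15]; [:: 4; 5; 6; 7; 8; 10; 14; 15]; [:: 0; 2; 4; 8; 10; 11; 13; 15];
    [:: 0; 2; 3; 6; 9; 10; 11; 12]; [:: 2; 3; 4; 5; 7; 9; 13; 14]; [:: 0; 1; 2; 3; 7; 8; 10; 12];
    [:: 0; 3; 4; 5; 6; 8; 11; 13]; [:: 0; 3; 6; 7; 10; 12; 14; 15]; [:: 3; 4; 5; 7; 8; 12; 13; 15];
    [:: 1; 5; 8; 9; 10; 13; 14; 15]; [:: 0; 3; 5; 6; 9; 12; 13; 14];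
    [:: 0; 7; 9; 10; 11; 13; 14; 15]; [:: 1; 2; 5; 7; 11; 12; 13; 15];
    [:: 1; 3; 6; 7; 8; 9; 11; 12]; [:: 2; 4; 6; 7; 8; 9; 13; 14]; [:: 1; 2; 3; 4; 5; 6; 10; 15];
    [:: 4; 5; 6; 9; 11; 12; 14; 15]; [:: 0; 2; 5; 7; 9; 10; 12; 13];
    [:: 0; 1; 3; 4; 10; 12; 13; 14]; [:: 1; 2; 5; 7; 8; 9; 10; 14]; [:: 0; 3; 5; 6; 7; 8; 9; 15];
    [:: 0; 1; 2; 4; 8; 11; 12; 15]; [:: 0; 1; 6; 7; 10; 11; 12; 13];
    [:: 3; 5; 9; 10; 11; 12; 13; 14]; [:: 0; 1; 4; 5; 6; 10; 12; 13];
    [:: 2; 4; 6; 7; 8; 11; 14; 15]; [:: 0; 1; 2; 3; 8; 9; 13; 14]; [:: 0; 2; 5; 6; 7; 8; 11; 12];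
    [:: 1; 3; 5; 6; 7; 10; 13; 15]; [:: 0; 1; 2; 4; 5; 6; 9; 13]; [:: 2; 3; 7; 8; 10; 12; 13; 14];
    [:: 0; 5; 6; 8; 9; 10; 11; 14]; [:: 1; 2; 5; 7; 10; 11; 14; 15];
    [:: 1; 4; 6; 8; 9; 10; 12; 14]; [:: 0; 2; 4; 6; 10; 12; 14; 15];
    [:: 1; 2; 3; 4; 9; 10; 11; 13]; [:: 4; 5; 7; 8; 9; 11; 13; 14]; [:: 3; 5; 7; 8; 9; 12; 14; 15];
    [:: 2; 3; 4; 6; 7; 12; 13; 15]; [:: 0; 3; 4; 5; 8; 10; 11; 15]; [:: 1; 3; 4; 6; 7; 11; 12; 14];
    [:: 0; 2; 4; 5; 6; 7; 13; 14]; [:: 0; 1; 6; 7; 9; 11; 13; 15]; [:: 1; 2; 4; 5; 10; 12; 13; 15];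
    [:: 1; 2; 8; 9; 11; 12; 13; 14]; [:: 6; 8; 10; 11; 12; 13; 14; 15];
    [:: 0; 1; 5; 8; 11; 12; 13; 15]; [:: 1; 2; 3; 4; 5; 8; 12; 14]; [:: 0; 2; 3; 4; 6; 9; 11; 15];
    [:: 0; 1; 3; 4; 5; 11; 13; 14]; [:: 0; 3; 4; 7; 8; 9; 12; 13]; [:: 0; 1; 2; 5; 6; 7; 8; 10];
    [:: 1; 3; 4; 6; 7; 8; 13; 15]; [:: 2; 3; 5; 7; 9; 10; 11; 13]; [:: 2; 5; 6; 7; 8; 10; 12; 13];
    [:: 0; 2; 3; 4; 5; 7; 10; 15]; [:: 3; 4; 6; 7; 9; 10; 11; 14];
    [:: 0; 4; 7; 11; 12; 13; 14; 15]; [:: 0; 2; 6; 7; 9; 10; 11; 14]; [:: 1; 2; 3; 5; 7; 8; 9; 15];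
    [:: 1; 3; 4; 5; 7; 10; 12; 14]; [:: 1; 2; 5; 8; 10; 11; 13; 15];
    [:: 0; 1; 3; 6; 8; 12; 13; 14]; [:: 1; 2; 4; 5; 8; 9; 11; 12]; [:: 0; 1; 2; 3; 6; 9; 14; 15];
    [:: 0; 1; 4; 7; 9; 10; 13; 15]; [:: 0; 2; 3; 4; 7; 8; 11; 14]; [:: 0; 1; 7; 8; 10; 11; 14; 15];
    [:: 4; 5; 7; 8; 9; 12; 13; 15]; [:: 4; 6; 9; 10; 12; 13; 14; 15];
    [:: 0; 1; 2; 4; 6; 10; 11; 13]; [:: 1; 3; 5; 6; 9; 10; 11; 15]; [:: 0; 2; 3; 6; 7; 8; 9; 14];
    [:: 1; 3; 4; 8; 10; 12; 13; 15]; [:: 0; 1; 2; 5; 8; 12; 13; 14]; [:: 1; 3; 4; 5; 6; 9; 10; 14];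
    [:: 0; 2; 3; 4; 5; 8; 9; 11]; [:: 1; 2; 4; 6; 7; 8; 10; 11]; [:: 0; 3; 4; 5; 10; 13; 14; 15];
    [:: 0; 1; 2; 3; 4; 6; 7; 9]; [:: 2; 3; 4; 6; 7; 10; 14; 15]; [:: 0; 1; 3; 10; 11; 12; 13; 15];
    [:: 1; 2; 3; 5; 6; 7; 11; 12]; [:: 0; 3; 6; 8; 10; 11; 13; 15]; [:: 1; 5; 6; 7; 9; 12; 14; 15];
    [:: 1; 7; 8; 9; 10; 11; 13; 14]; [:: 3; 5; 6; 7; 8; 9; 10; 13]; [:: 1; 2; 5; 6; 9; 11; 12; 14];
    [:: 0; 1; 2; 5; 6; 10; 11; 15]; [:: 0; 1; 3; 5; 9; 10; 12; 14]; [:: 0; 1; 4; 6; 8; 12; 13; 15];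
    [:: 2; 3; 4; 8; 9; 11; 12; 13]; [:: 2; 3; 5; 7; 10; 11; 13; 14];
    [:: 2; 3; 7; 8; 11; 12; 13; 15]; [:: 1; 2; 3; 4; 9; 13; 14; 15];
    [:: 5; 8; 10; 11; 12; 13; 14; 15]; [:: 0; 2; 4; 7; 9; 10; 11; 12];
    [:: 1; 4; 5; 6; 8; 11; 12; 14]; [:: 1; 2; 4; 7; 8; 11; 12; 14]; [:: 0; 1; 2; 5; 6; 7; 8; 15];
    [:: 0; 6; 7; 8; 12; 13; 14; 15]; [:: 1; 4; 5; 7; 9; 11; 14; 15]; [:: 0; 1; 3; 4; 7; 8; 12; 14];
    [:: 3; 5; 6; 7; 11; 12; 14; 15]; [:: 1; 2; 3; 6; 8; 10; 12; 13];
    [:: 0; 2; 6; 8; 9; 10; 13; 14]; [:: 2; 4; 8; 9; 10; 12; 13; 15];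
    [:: 1; 2; 3; 4; 8; 11; 13; 15]; [:: 0; 1; 2; 4; 5; 8; 9; 14]; [:: 0; 2; 3; 8; 10; 12; 14; 15];
    [:: 0; 3; 4; 6; 9; 11; 12; 15]; [:: 0; 1; 5; 8; 9; 10; 11; 15]; [:: 0; 4; 5; 6; 9; 11; 13; 14];
    [:: 0; 1; 3; 4; 5; 6; 7; 14]; [:: 0; 3; 5; 7; 8; 9; 11; 14]; [:: 0; 2; 4; 5; 6; 7; 9; 13];
    [:: 1; 2; 3; 9; 11; 13; 14; 15]; [:: 0; 2; 4; 6; 11; 12; 13; 15]])].

Lemma gf4_codes_certified :
  all (certified (false, false) (true, false) gf4_add gf4_mul gf4_inv) gf4_codes.
Proof. by vm_compute. Qed.

Lemma gf8_codes_certified :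
  all (certified (false, false, false) (true, false, false) gf8_add gf8_mul gf8_inv) gf8_codes.
Proof. by vm_compute. Qed.

Lemma card4_SO_code (F : finFieldType) (n k d : nat) : #|F| = 4 ->
  (n, k, d) \in [seq c.1.1 | c <- gf4_codes] -> exists_SO_code F n k d.
Proof.
move=> F4; have char2 : 2 \in [pchar F] by apply: (@card_finPcharP F 2 2).
have [w w_root] := card4_root F4.
apply: (certified_SO_code (phi := gf4_to w) _ _ (gf4_toD char2 w) (gf4_toM char2 w_root)
          gf4_mulV gf4_codes_certified);
  by rewrite /gf4_to /= ?mul0r ?addr0.
Qed.

Lemma card8_SO_code (F : finFieldType) (n k d : nat) : #|F| = 8 ->
  (n, k, d) \in [seq c.1.1 | c <- gf8_codes] -> exists_SO_code F n k d.
Proof.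
move=> F8; have char2 : 2 \in [pchar F] by apply: (@card_finPcharP F 2 3).
have [a a_root] := card8_root F8.
apply: (certified_SO_code (phi := gf8_to a) _ _ (gf8_toD char2 a) (gf8_toM char2 a_root)
          gf8_mulV gf8_codes_certified);
  by rewrite /gf8_to /= ?mul0r ?addr0.
Qed.

Theorem theorem15 :
  (forall F : finFieldType, #|F| = 4 ->
     [/\ exists_SO_code F 8 2 4, exists_SO_code F 8 3 4 & exists_SO_code F 8 4 4]) /\
  (forall F : finFieldType, #|F| = 8 ->
     exists_SO_code F 8 3 4 /\ exists_SO_code F 8 4 4 /\
     exists_SO_code F 10 4 5 /\ exists_SO_code F 10 5 4 /\
     exists_SO_code F 12 4 6 /\ exists_SO_code F 12 5 6 /\
     exists_SO_code F 12 6 5 /\ exists_SO_code F 14 5 7 /\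
     exists_SO_code F 14 6 6 /\ exists_SO_code F 14 7 6 /\
     exists_SO_code F 16 5 8 /\ exists_SO_code F 16 6 8 /\
     exists_SO_code F 16 7 6 /\ exists_SO_code F 16 8 6).
Proof.
split=> F hF; first by split; apply: (card4_SO_code hF).
by do !split; apply: (card8_SO_code hF).
Qed.
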